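(* Regarding the categories below as 1-categories: the full subcategory $\mathbf{SGr}$ of small symmetric 2-groups is coreflective in the category $\mathbf{SMC}$ of small symmetric monoidal categories and symmetric strong monoidal functors, with right adjoint to the inclusion sending each $\mathcal M$ to its Picard 2-group $\mathrm{Pic}(\mathcal M)$; and the full subcategory $\mathbf{SPu}$ of small symmetric purely monoidal categories is reflective in $\mathbf{SMC}$, with left adjoint to the inclusion sending each $\mathcal M$ to $P(\mathcal M)$.
   Context: An object $A$ of a monoidal category $(\mathcal M,\otimes,I,a,\ell,r)$ is weakly invertible if there is $B$ with $A\otimes B\cong B\otimes A\cong I$. A (symmetric) 2-group is a (symmetric) monoidal groupoid in which every object is weakly invertible. $\mathrm{Pic}(\mathcal M)$ is the subcategory of weakly invertible objects and isomorphisms between them, with inherited structure. A monoidal category is purely monoidal if between any two weakly invertible objects there is exactly one isomorphism. For symmetric monoidal $\mathcal M$ (symmetry $b$), $P(\mathcal M)$ is the symmetric monoidal category with the same objects as $\mathcal M$; morphisms $X\to Y$ are classes $[A,f]$ of pairs with $A$ weakly invertible and $f\colon X\to Y\otimes A$, where $(A,f)\sim(A',f')$ iff some isomorphism $\alpha\colon A\to A'$ satisfies $(Y\otimes\alpha)f=f'$; composition $[B,g]\circ[A,f]=[B\otimes A,\ a_{Z,B,A}(g\otimes A)f]$; identities $[I,r_X^{-1}]$; tensor of objects as in $\mathcal M$; $[A,f]\otimes[A',f']=[A\otimes A',g]$ where $g$ is $f\otimes f'$ followed by the canonical reassociation and the symmetry $b_{A,Y'}$ giving $(Y\otimes A)\otimes(Y'\otimes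 A')\to(Y\otimes Y')\otimes(A\otimes A')$; associator, unitors and symmetry are the images of those of $\mathcal M$ under the functor $\pi_{\mathcal M}\colon\mathcal M\to P(\mathcal M)$, $X\mapsto X$, $f\mapsto[I,r_Y^{-1}f]$. *)

From Stdlib Require Import ClassicalEpsilon.

(* The inverses of the
   associator and unitors are included as data (they are unique, so this
   is harmless); the symmetry is its own inverse (axiom ax_sym_inv). *)
Record smc_data : Type := {
  mob : Type;
  mhom : mob -> mob -> Type;
  mcomp : forall X Y Z : mob, mhom Y Z -> mhom X Y -> mhom X Z;
  mid : forall X : mob, mhom X X;
  mtens : mob -> mob -> mob;
  mtensm : forall X X' Y Y' : mob, mhom X X' -> mhom Y Y' ->
           mhom (mtens X Y) (mtens X' Y');
  munit : mob;
  massoc : forall X Y Z, mhom (mtens (mtens X Y) Z) (mtens X (mtens Y Z));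
  massoc_inv : forall X Y Z, mhom (mtens X (mtens Y Z)) (mtens (mtens X Y) Z);
  mlunit : forall X, mhom (mtens munit X) X;
  mlunit_inv : forall X, mhom X (mtens munit X);
  mrunit : forall X, mhom (mtens X munit) X;
  mrunit_inv : forall X, mhom X (mtens X munit);
  msym : forall X Y, mhom (mtens X Y) (mtens Y X) }.

Arguments mhom {s} _ _.
Arguments mcomp {s X Y Z} _ _.
Arguments mid {s} _.
Arguments mtens {s} _ _.
Arguments mtensm {s X X' Y Y'} _ _.
Arguments munit {s}.
Arguments massoc {s} _ _ _.
Arguments massoc_inv {s} _ _ _.
Arguments mlunit {s} _.
Arguments mlunit_inv {s} _.
Arguments mrunit {s} _.
Arguments mrunit_inv {s} _.
Arguments msym {s} _ _.

Record smc_axioms (M : smc_data) : Prop := {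
  ax_comp_assoc : forall (W X Y Z : mob M) (h : mhom Y Z) (g : mhom X Y)
      (f : mhom W X), mcomp h (mcomp g f) = mcomp (mcomp h g) f;
  ax_id_l : forall (X Y : mob M) (f : mhom X Y), mcomp (mid Y) f = f;
  ax_id_r : forall (X Y : mob M) (f : mhom X Y), mcomp f (mid X) = f;
  ax_tens_id : forall X Y : mob M, mtensm (mid X) (mid Y) = mid (mtens X Y);
  ax_tens_comp : forall (X X' X'' Y Y' Y'' : mob M) (f : mhom X X')
      (f' : mhom X' X'') (g : mhom Y Y') (g' : mhom Y' Y''),
      mtensm (mcomp f' f) (mcomp g' g) = mcomp (mtensm f' g') (mtensm f g);
  ax_assoc_nat : forall (X X' Y Y' Z Z' : mob M) (f : mhom X X')
      (g : mhom Y Y') (h : mhom Z Z'),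
      mcomp (massoc X' Y' Z') (mtensm (mtensm f g) h)
      = mcomp (mtensm f (mtensm g h)) (massoc X Y Z);
  ax_lunit_nat : forall (X Y : mob M) (f : mhom X Y),
      mcomp (mlunit Y) (mtensm (mid munit) f) = mcomp f (mlunit X);
  ax_runit_nat : forall (X Y : mob M) (f : mhom X Y),
      mcomp (mrunit Y) (mtensm f (mid munit)) = mcomp f (mrunit X);
  ax_sym_nat : forall (X X' Y Y' : mob M) (f : mhom X X') (g : mhom Y Y'),
      mcomp (msym X' Y') (mtensm f g) = mcomp (mtensm g f) (msym X Y);
  ax_assoc_inv1 : forall X Y Z : mob M,
      mcomp (massoc_inv X Y Z) (massoc X Y Z) = mid _;
  ax_assoc_inv2 : forall X Y Z : mob M,
      mcomp (massoc X Y Z) (massoc_inv X Y Z) = mid _;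
  ax_lunit_inv1 : forall X : mob M, mcomp (mlunit_inv X) (mlunit X) = mid _;
  ax_lunit_inv2 : forall X : mob M, mcomp (mlunit X) (mlunit_inv X) = mid _;
  ax_runit_inv1 : forall X : mob M, mcomp (mrunit_inv X) (mrunit X) = mid _;
  ax_runit_inv2 : forall X : mob M, mcomp (mrunit X) (mrunit_inv X) = mid _;
  ax_sym_inv : forall X Y : mob M, mcomp (msym Y X) (msym X Y) = mid _;
  ax_triangle : forall X Y : mob M,
      mcomp (mtensm (mid X) (mlunit Y)) (massoc X munit Y)
      = mtensm (mrunit X) (mid Y);
  ax_pentagon : forall W X Y Z : mob M,
      mcomp (mtensm (mid W) (massoc X Y Z))
        (mcomp (massoc W (mtens X Y) Z) (mtensm (massoc W X Y) (mid Z)))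
      = mcomp (massoc W X (mtens Y Z)) (massoc (mtens W X) Y Z);
  ax_hexagon : forall X Y Z : mob M,
      mcomp (massoc Y Z X) (mcomp (msym X (mtens Y Z)) (massoc X Y Z))
      = mcomp (mtensm (mid Y) (msym X Z))
          (mcomp (massoc Y X Z) (mtensm (msym X Y) (mid Z))) }.

Record SMC : Type := { smc :> smc_data; smc_ax : smc_axioms smc }.

Definition is_iso (M : smc_data) {X Y : mob M} (f : mhom X Y) : Prop :=
  exists g : mhom Y X, mcomp g f = mid X /\ mcomp f g = mid Y.

Definition isomorphic (M : smc_data) (X Y : mob M) : Prop :=
  exists f : mhom X Y, is_iso M f.

Definition weakly_invertible (M : smc_data) (A : mob M) : Prop :=
  exists B : mob M, isomorphic M (mtens A B) munit /\
                    isomorphic M (mtens B A) munit.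

Definition is_groupoid (M : smc_data) : Prop :=
  forall (X Y : mob M) (f : mhom X Y), is_iso M f.

Definition is_sym_2group (M : smc_data) : Prop :=
  smc_axioms M /\ is_groupoid M /\ forall X : mob M, weakly_invertible M X.

Definition purely_monoidal (M : smc_data) : Prop :=
  forall A B : mob M, weakly_invertible M A -> weakly_invertible M B ->
    exists f : mhom A B, is_iso M f /\
      forall g : mhom A B, is_iso M g -> g = f.

Record fdata (M N : smc_data) : Type := {
  fo : mob M -> mob N;
  fm : forall X Y : mob M, mhom X Y -> mhom (fo X) (fo Y);
  fphi2 : forall X Y : mob M, mhom (mtens (fo X) (fo Y)) (fo (mtens X Y));
  fphi0 : mhom (s := N) munit (fo munit) }.

Arguments fo {M N} _ _.
Arguments fm {M N} _ {X Y} _.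
Arguments fphi2 {M N} _ _ _.
Arguments fphi0 {M N} _.

Record is_ssmf (M N : smc_data) (F : fdata M N) : Prop := {
  f_comp : forall (X Y Z : mob M) (g : mhom Y Z) (f : mhom X Y),
      fm F (mcomp g f) = mcomp (fm F g) (fm F f);
  f_id : forall X : mob M, fm F (mid X) = mid (fo F X);
  f_phi2_nat : forall (X X' Y Y' : mob M) (f : mhom X X') (g : mhom Y Y'),
      mcomp (fm F (mtensm f g)) (fphi2 F X Y)
      = mcomp (fphi2 F X' Y') (mtensm (fm F f) (fm F g));
  f_phi2_iso : forall X Y : mob M, is_iso N (fphi2 F X Y);
  f_phi0_iso : is_iso N (fphi0 F);
  f_assoc : forall X Y Z : mob M,
      mcomp (fm F (massoc X Y Z))
        (mcomp (fphi2 F (mtens X Y) Z) (mtensm (fphi2 F X Y) (mid (fo F Z))))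
      = mcomp (fphi2 F X (mtens Y Z))
          (mcomp (mtensm (mid (fo F X)) (fphi2 F Y Z))
             (massoc (fo F X) (fo F Y) (fo F Z)));
  f_lunit : forall X : mob M,
      mcomp (fm F (mlunit X))
        (mcomp (fphi2 F munit X) (mtensm (fphi0 F) (mid (fo F X))))
      = mlunit (fo F X);
  f_runit : forall X : mob M,
      mcomp (fm F (mrunit X))
        (mcomp (fphi2 F X munit) (mtensm (mid (fo F X)) (fphi0 F)))
      = mrunit (fo F X);
  f_sym : forall X Y : mob M,
      mcomp (fm F (msym X Y)) (fphi2 F X Y)
      = mcomp (fphi2 F Y X) (msym (fo F X) (fo F Y)) }.

Definition fcomp {L M N : smc_data} (G : fdata M N) (F : fdata L M)
  : fdata L N :=
  {| fo := fun X => fo G (fo F X);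
     fm := fun X Y f => fm G (fm F f);
     fphi2 := fun X Y => mcomp (fm G (fphi2 F X Y)) (fphi2 G (fo F X) (fo F Y));
     fphi0 := mcomp (fm G (fphi0 F)) (fphi0 G) |}.

Section Facts.
Variable M : SMC.
Let Ax := smc_ax M.

Lemma iso_id (X : mob M) : is_iso M (mid X).
Proof. exists (mid X); split; apply (ax_id_l _ Ax). Qed.

Lemma iso_comp (X Y Z : mob M) (g : mhom Y Z) (f : mhom X Y) :
  is_iso M f -> is_iso M g -> is_iso M (mcomp g f).
Proof.
  intros [f' [Hf1 Hf2]] [g' [Hg1 Hg2]]; exists (mcomp f' g'); split.
  - rewrite (ax_comp_assoc _ Ax), <- (ax_comp_assoc _ Ax _ _ _ _ f'), Hg1,
      (ax_id_r _ Ax); exact Hf1.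
  - rewrite (ax_comp_assoc _ Ax), <- (ax_comp_assoc _ Ax _ _ _ _ g), Hf2,
      (ax_id_r _ Ax); exact Hg2.
Qed.

Lemma iso_tensm (X X' Y Y' : mob M) (f : mhom X X') (g : mhom Y Y') :
  is_iso M f -> is_iso M g -> is_iso M (mtensm f g).
Proof.
  intros [f' [Hf1 Hf2]] [g' [Hg1 Hg2]]; exists (mtensm f' g'); split;
    rewrite <- (ax_tens_comp _ Ax); [rewrite Hf1, Hg1 | rewrite Hf2, Hg2];
    apply (ax_tens_id _ Ax).
Qed.

Lemma iso_assoc (X Y Z : mob M) : is_iso M (massoc X Y Z).
Proof. exists (massoc_inv X Y Z); split; [apply ax_assoc_inv1 | apply ax_assoc_inv2]; exact Ax. Qed.
Lemma iso_assoc_inv (X Y Z : mob M) : is_iso M (massoc_inv X Y Z).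
Proof. exists (massoc X Y Z); split; [apply ax_assoc_inv2 | apply ax_assoc_inv1]; exact Ax. Qed.
Lemma iso_lunit (X : mob M) : is_iso M (mlunit X).
Proof. exists (mlunit_inv X); split; [apply ax_lunit_inv1 | apply ax_lunit_inv2]; exact Ax. Qed.
Lemma iso_lunit_inv (X : mob M) : is_iso M (mlunit_inv X).
Proof. exists (mlunit X); split; [apply ax_lunit_inv2 | apply ax_lunit_inv1]; exact Ax. Qed.
Lemma iso_runit (X : mob M) : is_iso M (mrunit X).
Proof. exists (mrunit_inv X); split; [apply ax_runit_inv1 | apply ax_runit_inv2]; exact Ax. Qed.
Lemma iso_runit_inv (X : mob M) : is_iso M (mrunit_inv X).
Proof. exists (mrunit X); split; [apply ax_runit_inv2 | apply ax_runit_inv1]; exact Ax. Qed.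
Lemma iso_sym (X Y : mob M) : is_iso M (msym X Y).
Proof. exists (msym Y X); split; apply (ax_sym_inv _ Ax). Qed.

Lemma isomorphic_trans (X Y Z : mob M) :
  isomorphic M X Y -> isomorphic M Y Z -> isomorphic M X Z.
Proof. intros [f Hf] [g Hg]; exists (mcomp g f); apply iso_comp; auto. Qed.

Lemma isomorphic_tens (X X' Y Y' : mob M) :
  isomorphic M X X' -> isomorphic M Y Y' ->
  isomorphic M (mtens X Y) (mtens X' Y').
Proof. intros [f Hf] [g Hg]; exists (mtensm f g); apply iso_tensm; auto. Qed.

Lemma isomorphic_refl (X : mob M) : isomorphic M X X.
Proof. exists (mid X); apply iso_id. Qed.

Lemma wi_unit : weakly_invertible M munit.
Proof.
  exists munit; split; exists (mlunit munit); apply iso_lunit.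
Qed.

Lemma wi_tens (A C : mob M) :
  weakly_invertible M A -> weakly_invertible M C ->
  weakly_invertible M (mtens A C).
Proof.
  intros [A' [HA1 HA2]] [C' [HC1 HC2]]; exists (mtens C' A'); split.
  - eapply isomorphic_trans. { exists (massoc A C (mtens C' A')); apply iso_assoc. }
    eapply isomorphic_trans.
    { apply isomorphic_tens; [apply isomorphic_refl|].
      exists (massoc_inv C C' A'); apply iso_assoc_inv. }
    eapply isomorphic_trans.
    { apply isomorphic_tens; [apply isomorphic_refl|].
      apply isomorphic_tens; [exact HC1 | apply isomorphic_refl]. }
    eapply isomorphic_trans.
    { apply isomorphic_tens; [apply isomorphic_refl|].
      exists (mlunit A'); apply iso_lunit. }
    exact HA1.
  - eapply isomorphic_trans. { exists (massoc C' A' (mtens A C)); apply iso_assoc. }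
    eapply isomorphic_trans.
    { apply isomorphic_tens; [apply isomorphic_refl|].
      exists (massoc_inv A' A C); apply iso_assoc_inv. }
    eapply isomorphic_trans.
    { apply isomorphic_tens; [apply isomorphic_refl|].
      apply isomorphic_tens; [exact HA2 | apply isomorphic_refl]. }
    eapply isomorphic_trans.
    { apply isomorphic_tens; [apply isomorphic_refl|].
      exists (mlunit C); apply iso_lunit. }
    exact HC2.
Qed.

End Facts.

Section Pic.
Variable M : SMC.

Definition pic_ob : Type := {X : mob M | weakly_invertible M X}.
Definition pic_hom (A B : pic_ob) : Type :=
  {f : mhom (proj1_sig A) (proj1_sig B) | is_iso M f}.

Definition pic_tens (A B : pic_ob) : pic_ob :=
  exist _ (mtens (proj1_sig A) (proj1_sig B))
    (wi_tens M _ _ (proj2_sig A) (proj2_sig B)).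
Definition pic_unit : pic_ob := exist _ munit (wi_unit M).

Definition Pic_data : smc_data :=
  {| mob := pic_ob;
     mhom := pic_hom;
     mcomp := fun X Y Z g f =>
       exist _ (mcomp (proj1_sig g) (proj1_sig f))
         (iso_comp M _ _ _ _ _ (proj2_sig f) (proj2_sig g));
     mid := fun X => exist _ (mid (proj1_sig X)) (iso_id M _);
     mtens := pic_tens;
     mtensm := fun X X' Y Y' f g =>
       exist _ (mtensm (proj1_sig f) (proj1_sig g))
         (iso_tensm M _ _ _ _ _ _ (proj2_sig f) (proj2_sig g));
     munit := pic_unit;
     massoc := fun X Y Z => exist _ (massoc (proj1_sig X) (proj1_sig Y) (proj1_sig Z))
                              (iso_assoc M _ _ _);
     massoc_inv := fun X Y Z =>
       exist _ (massoc_inv (proj1_sig X) (proj1_sig Y) (proj1_sig Z))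
         (iso_assoc_inv M _ _ _);
     mlunit := fun X => exist _ (mlunit (proj1_sig X)) (iso_lunit M _);
     mlunit_inv := fun X => exist _ (mlunit_inv (proj1_sig X)) (iso_lunit_inv M _);
     mrunit := fun X => exist _ (mrunit (proj1_sig X)) (iso_runit M _);
     mrunit_inv := fun X => exist _ (mrunit_inv (proj1_sig X)) (iso_runit_inv M _);
     msym := fun X Y => exist _ (msym (proj1_sig X) (proj1_sig Y)) (iso_sym M _ _) |}.

Definition pic_incl : fdata Pic_data M :=
  {| fo := fun A : mob Pic_data => proj1_sig A;
     fm := fun (A B : mob Pic_data) (f : mhom A B) => proj1_sig f;
     fphi2 := fun (A B : mob Pic_data) => mid (mtens (proj1_sig A) (proj1_sig B));
     fphi0 := mid munit |}.

End Pic.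

Section P.
Variable M : SMC.

Definition wob : Type := {A : mob M | weakly_invertible M A}.
Definition wunit : wob := exist _ munit (wi_unit M).
Definition wtens (B A : wob) : wob :=
  exist _ (mtens (proj1_sig B) (proj1_sig A))
    (wi_tens M _ _ (proj2_sig B) (proj2_sig A)).

Definition prep (X Y : mob M) : Type :=
  {A : wob & mhom X (mtens Y (proj1_sig A))}.

Definition prel {X Y : mob M} (r s : prep X Y) : Prop :=
  exists alpha : mhom (proj1_sig (projT1 r)) (proj1_sig (projT1 s)),
    is_iso M alpha /\ mcomp (mtensm (mid Y) alpha) (projT2 r) = projT2 s.

Definition pcls {X Y : mob M} (r : prep X Y) : prep X Y -> Prop :=
  fun s => prel r s.

(* morphisms of P(M): classes [A,f] *)
Definition phom (X Y : mob M) : Type :=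
  {S : prep X Y -> Prop | exists r : prep X Y, S = pcls r}.

Definition pmk {X Y : mob M} (r : prep X Y) : phom X Y :=
  exist _ (pcls r) (ex_intro _ r eq_refl).

Definition prep_of {X Y : mob M} (S : phom X Y) : prep X Y :=
  proj1_sig (constructive_indefinite_description _ (proj2_sig S)).

Definition rcomp {X Y Z : mob M} (r : prep Y Z) (s : prep X Y) : prep X Z :=
  existT _ (wtens (projT1 r) (projT1 s))
    (mcomp (massoc Z (proj1_sig (projT1 r)) (proj1_sig (projT1 s)))
       (mcomp (mtensm (projT2 r) (mid (proj1_sig (projT1 s)))) (projT2 s))).

Definition pcomp {X Y Z : mob M} (g : phom Y Z) (f : phom X Y) : phom X Z :=
  pmk (rcomp (prep_of g) (prep_of f)).

Definition pid (X : mob M) : phom X X :=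
  pmk (existT (fun A : wob => mhom X (mtens X (proj1_sig A))) wunit (mrunit_inv X)).

Definition canon (Y A Y' A' : mob M)
  : mhom (mtens (mtens Y A) (mtens Y' A')) (mtens (mtens Y Y') (mtens A A')) :=
  mcomp (massoc_inv Y Y' (mtens A A'))
   (mcomp (mtensm (mid Y) (massoc Y' A A'))
    (mcomp (mtensm (mid Y) (mtensm (msym A Y') (mid A')))
     (mcomp (mtensm (mid Y) (massoc_inv A Y' A'))
        (massoc Y A (mtens Y' A'))))).

Definition rtens {X Y X' Y' : mob M} (r : prep X Y) (s : prep X' Y')
  : prep (mtens X X') (mtens Y Y') :=
  existT _ (wtens (projT1 r) (projT1 s))
    (mcomp (canon Y (proj1_sig (projT1 r)) Y' (proj1_sig (projT1 s)))
       (mtensm (projT2 r) (projT2 s))).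

Definition ptensm {X X' Y Y' : mob M} (f : phom X X') (g : phom Y Y')
  : phom (mtens X Y) (mtens X' Y') :=
  pmk (rtens (prep_of f) (prep_of g)).

Definition pi_m {X Y : mob M} (f : mhom X Y) : phom X Y :=
  pmk (existT (fun A : wob => mhom X (mtens Y (proj1_sig A))) wunit
         (mcomp (mrunit_inv Y) f)).

Definition P_data : smc_data :=
  {| mob := mob M;
     mhom := phom;
     mcomp := fun X Y Z g f => pcomp g f;
     mid := pid;
     mtens := fun X Y => mtens X Y;
     mtensm := fun X X' Y Y' f g => ptensm f g;
     munit := munit;
     massoc := fun X Y Z => pi_m (massoc X Y Z);
     massoc_inv := fun X Y Z => pi_m (massoc_inv X Y Z);
     mlunit := fun X => pi_m (mlunit X);
     mlunit_inv := fun X => pi_m (mlunit_inv X);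
     mrunit := fun X => pi_m (mrunit X);
     mrunit_inv := fun X => pi_m (mrunit_inv X);
     msym := fun X Y => pi_m (msym X Y) |}.

Definition pi_functor : fdata M P_data :=
  @Build_fdata M P_data (fun X : mob M => X)
     (fun (X Y : mob M) (f : mhom (s := M) X Y) => pi_m f)
     (fun X Y => pid (mtens X Y))
     (pid munit).

End P.

(* Pic(M) is the largest sub-2-group of M: a symmetric strong monoidal functor out of a
   2-group sends arrows to isomorphisms and objects to weakly invertible objects, so it
   factors uniquely through the inclusion Pic(M) -> M.

   In P(M) an arrow [A, f] : X -> Y carries a weakly invertible "error term" A.  An
   isomorphism of P(M) is an [A, f] with f : X -> Y ⊗ A invertible in M, and for two of
   them the comparison f' ∘ f^-1 : Y ⊗ A -> Y ⊗ A' has the form Y ⊗ α (Y ⊗ - is fully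
   faithful when Y is weakly invertible), so they are equal: P(M) is purely monoidal.
   A functor F : M -> N into a purely monoidal N extends by
   [A, f] |-> r ∘ (F Y ⊗ u_A) ∘ φ^-1 ∘ F f, where u_A : F A -> I is the unique
   isomorphism; uniqueness of the u_A makes this well defined and functorial, and the
   factorisation [A, f] = π(r_Y) ∘ (Y ⊗ [A, l_A^-1]) ∘ π(f) makes the extension unique.
   Most of the work is the coherence needed for P(M) to be symmetric monoidal, which all
   reduces to properties of the middle-four interchange [canon] of M. *)

From Stdlib Require Import ProofIrrelevance FunctionalExtensionality PropExtensionality
  ClassicalEpsilon.

Notation "g ∘ f" := (mcomp g f) (at level 40, left associativity).
Notation "f ⊗ g" := (mtensm f g) (at level 30).

Section MonoidalLaws.
Context {M : SMC}.
Let Ax := smc_ax M.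
Local Notation "1" := (mid _).

Lemma comp_assoc {W X Y Z : mob M} (h : mhom Y Z) (g : mhom X Y) (f : mhom W X) :
  h ∘ (g ∘ f) = (h ∘ g) ∘ f.
Proof. apply (ax_comp_assoc _ Ax). Qed.
Lemma comp_id_l {X Y : mob M} (f : mhom X Y) : 1 ∘ f = f.
Proof. apply (ax_id_l _ Ax). Qed.
Lemma comp_id_r {X Y : mob M} (f : mhom X Y) : f ∘ 1 = f.
Proof. apply (ax_id_r _ Ax). Qed.
Lemma tens_id (X Y : mob M) : mid X ⊗ mid Y = mid (mtens X Y).
Proof. apply (ax_tens_id _ Ax). Qed.
Lemma tens_comp {X X' X'' Y Y' Y'' : mob M} (f : mhom X X') (f' : mhom X' X'')
  (g : mhom Y Y') (g' : mhom Y' Y'') : (f' ∘ f) ⊗ (g' ∘ g) = (f' ⊗ g') ∘ (f ⊗ g).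
Proof. apply (ax_tens_comp _ Ax). Qed.

Lemma assoc_nat {X X' Y Y' Z Z' : mob M} (f : mhom X X') (g : mhom Y Y') (h : mhom Z Z') :
  massoc X' Y' Z' ∘ ((f ⊗ g) ⊗ h) = (f ⊗ (g ⊗ h)) ∘ massoc X Y Z.
Proof. apply (ax_assoc_nat _ Ax). Qed.
Lemma lunit_nat {X Y : mob M} (f : mhom X Y) : mlunit Y ∘ (1 ⊗ f) = f ∘ mlunit X.
Proof. apply (ax_lunit_nat _ Ax). Qed.
Lemma runit_nat {X Y : mob M} (f : mhom X Y) : mrunit Y ∘ (f ⊗ 1) = f ∘ mrunit X.
Proof. apply (ax_runit_nat _ Ax). Qed.
Lemma sym_nat {X X' Y Y' : mob M} (f : mhom X X') (g : mhom Y Y') :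
  msym X' Y' ∘ (f ⊗ g) = (g ⊗ f) ∘ msym X Y.
Proof. apply (ax_sym_nat _ Ax). Qed.

Lemma assoc_assoc_inv (X Y Z : mob M) : massoc X Y Z ∘ massoc_inv X Y Z = 1.
Proof. apply (ax_assoc_inv2 _ Ax). Qed.
Lemma assoc_inv_assoc (X Y Z : mob M) : massoc_inv X Y Z ∘ massoc X Y Z = 1.
Proof. apply (ax_assoc_inv1 _ Ax). Qed.
Lemma lunit_lunit_inv (X : mob M) : mlunit X ∘ mlunit_inv X = 1.
Proof. apply (ax_lunit_inv2 _ Ax). Qed.
Lemma lunit_inv_lunit (X : mob M) : mlunit_inv X ∘ mlunit X = 1.
Proof. apply (ax_lunit_inv1 _ Ax). Qed.
Lemma runit_runit_inv (X : mob M) : mrunit X ∘ mrunit_inv X = 1.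
Proof. apply (ax_runit_inv2 _ Ax). Qed.
Lemma runit_inv_runit (X : mob M) : mrunit_inv X ∘ mrunit X = 1.
Proof. apply (ax_runit_inv1 _ Ax). Qed.
Lemma sym_sym (X Y : mob M) : msym Y X ∘ msym X Y = 1.
Proof. apply (ax_sym_inv _ Ax). Qed.

Lemma triangle (X Y : mob M) : (mid X ⊗ mlunit Y) ∘ massoc X munit Y = mrunit X ⊗ mid Y.
Proof. apply (ax_triangle _ Ax). Qed.
Lemma pentagon (W X Y Z : mob M) :
  (mid W ⊗ massoc X Y Z) ∘ (massoc W (mtens X Y) Z ∘ (massoc W X Y ⊗ mid Z))
  = massoc W X (mtens Y Z) ∘ massoc (mtens W X) Y Z.
Proof. apply (ax_pentagon _ Ax). Qed.
Lemma hexagon (X Y Z : mob M) :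
  massoc Y Z X ∘ (msym X (mtens Y Z) ∘ massoc X Y Z)
  = (mid Y ⊗ msym X Z) ∘ (massoc Y X Z ∘ (msym X Y ⊗ mid Z)).
Proof. apply (ax_hexagon _ Ax). Qed.

Lemma iso_cancel_l {X Y Z : mob M} (e : mhom Y Z) (f g : mhom X Y) :
  is_iso M e -> e ∘ f = e ∘ g -> f = g.
Proof.
  intros [e' [H1 _]] H.
  rewrite <- (comp_id_l f), <- (comp_id_l g), <- H1, <- !comp_assoc, H; reflexivity.
Qed.
Lemma iso_cancel_r {X Y Z : mob M} (e : mhom X Y) (f g : mhom Y Z) :
  is_iso M e -> f ∘ e = g ∘ e -> f = g.
Proof.
  intros [e' [_ H2]] H.
  rewrite <- (comp_id_r f), <- (comp_id_r g), <- H2, !comp_assoc, H; reflexivity.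
Qed.

Lemma iso_of_comp_id {X Y : mob M} (e : mhom Y X) (k : mhom X Y) :
  is_iso M e -> e ∘ k = 1 -> is_iso M k.
Proof.
  intros [e' [H1 H2]] E. exists e. split; [exact E|].
  replace k with e'; [exact H1|].
  rewrite <- (comp_id_r e'), <- E, comp_assoc, H1, comp_id_l; reflexivity.
Qed.

Lemma iso_of_comp_iso {X Y Z : mob M} (f : mhom X Y) (g : mhom Y Z) (l : mhom Z Y) :
  l ∘ g = 1 -> is_iso M (g ∘ f) -> is_iso M f.
Proof.
  intros Hl [h [H1 H2]]. exists (h ∘ g). split; [rewrite <- comp_assoc; exact H1|].
  rewrite <- (comp_id_l (f ∘ (h ∘ g))), <- Hl, <- comp_assoc, (comp_assoc f h g),
    (comp_assoc g (f ∘ h) g), (comp_assoc g f h), H2, comp_id_l; reflexivity.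
Qed.

Lemma right_inv_unique {X Y : mob M} (u w : mhom Y X) (v : mhom X Y) :
  u ∘ v = 1 -> v ∘ w = 1 -> u = w.
Proof. intros Hu Hw. rewrite <- (comp_id_r u), <- Hw, comp_assoc, Hu, comp_id_l; reflexivity. Qed.

Definition inv_of {X Y : mob M} {f : mhom X Y} (H : is_iso M f) : mhom Y X :=
  proj1_sig (constructive_indefinite_description _ H).
Lemma inv_of_l {X Y : mob M} {f : mhom X Y} (H : is_iso M f) : inv_of H ∘ f = 1.
Proof. exact (proj1 (proj2_sig (constructive_indefinite_description _ H))). Qed.
Lemma inv_of_r {X Y : mob M} {f : mhom X Y} (H : is_iso M f) : f ∘ inv_of H = 1.
Proof. exact (proj2 (proj2_sig (constructive_indefinite_description _ H))). Qed.
Lemma iso_inv_of {X Y : mob M} {f : mhom X Y} (H : is_iso M f) : is_iso M (inv_of H).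
Proof. exists f. split; [apply inv_of_r|apply inv_of_l]. Qed.

Lemma cancel_k {W X Y : mob M} {f : mhom X Y} {g : mhom Y X} (H : g ∘ f = 1)
  (k : mhom W X) : g ∘ (f ∘ k) = k.
Proof. rewrite comp_assoc, H, comp_id_l; reflexivity. Qed.

Lemma assoc_inv_nat {X X' Y Y' Z Z' : mob M} (f : mhom X X') (g : mhom Y Y') (h : mhom Z Z') :
  massoc_inv X' Y' Z' ∘ (f ⊗ (g ⊗ h)) = ((f ⊗ g) ⊗ h) ∘ massoc_inv X Y Z.
Proof.
  apply (iso_cancel_l (massoc X' Y' Z')); [apply iso_assoc|].
  rewrite comp_assoc, assoc_assoc_inv, comp_id_l, comp_assoc, assoc_nat, <- comp_assoc,
    assoc_assoc_inv, comp_id_r; reflexivity.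
Qed.
Lemma runit_inv_nat {X Y : mob M} (f : mhom X Y) : mrunit_inv Y ∘ f = (f ⊗ 1) ∘ mrunit_inv X.
Proof.
  apply (iso_cancel_l (mrunit Y)); [apply iso_runit|].
  rewrite comp_assoc, runit_runit_inv, comp_id_l, comp_assoc, runit_nat, <- comp_assoc,
    runit_runit_inv, comp_id_r; reflexivity.
Qed.

Lemma tens_split_l {X X' Y Y' : mob M} (f : mhom X X') (g : mhom Y Y') :
  f ⊗ g = (f ⊗ mid Y') ∘ (mid X ⊗ g).
Proof. rewrite <- tens_comp, comp_id_l, comp_id_r; reflexivity. Qed.
Lemma tens_split_r {X X' Y Y' : mob M} (f : mhom X X') (g : mhom Y Y') :
  f ⊗ g = (mid X' ⊗ g) ∘ (f ⊗ mid Y).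
Proof. rewrite <- tens_comp, comp_id_l, comp_id_r; reflexivity. Qed.
Lemma id_tens_comp {X Y Y' Y'' : mob M} (g : mhom Y Y') (g' : mhom Y' Y'') :
  (mid X ⊗ g') ∘ (mid X ⊗ g) = mid X ⊗ (g' ∘ g).
Proof. rewrite <- tens_comp, comp_id_l; reflexivity. Qed.
Lemma tens_id_comp {X X' X'' Y : mob M} (f : mhom X X') (f' : mhom X' X'') :
  (f' ⊗ mid Y) ∘ (f ⊗ mid Y) = (f' ∘ f) ⊗ mid Y.
Proof. rewrite <- tens_comp, comp_id_l; reflexivity. Qed.
Lemma id_tens_comp_r {X X' Y Y' Y'' : mob M} (f : mhom X X') (h : mhom Y Y') (g : mhom Y' Y'') :
  (mid X' ⊗ g) ∘ (f ⊗ h) = f ⊗ (g ∘ h).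
Proof. rewrite <- tens_comp, comp_id_l; reflexivity. Qed.
Lemma tens_comp_r_split {X X' Y Y' Y'' : mob M} (f : mhom X X') (h : mhom Y Y') (g : mhom Y' Y'') :
  f ⊗ (g ∘ h) = (f ⊗ g) ∘ (mid X ⊗ h).
Proof. rewrite <- tens_comp, comp_id_r; reflexivity. Qed.
Lemma tens_comp_l_split {X X' X'' Y Y' : mob M} (f : mhom X X') (g : mhom X' X'') (h : mhom Y Y') :
  (g ∘ f) ⊗ h = (g ⊗ mid Y') ∘ (f ⊗ h).
Proof. rewrite <- tens_comp, comp_id_l; reflexivity. Qed.
Lemma whisker_exchange {X X' Y Y' : mob M} (f : mhom X X') (g : mhom Y Y') :
  (f ⊗ mid Y') ∘ (mid X ⊗ g) = (mid X' ⊗ g) ∘ (f ⊗ mid Y).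
Proof. rewrite <- tens_split_l, <- tens_split_r; reflexivity. Qed.
Lemma whisker_l_inv {V X Y : mob M} {f : mhom X Y} {g : mhom Y X} (H : g ∘ f = 1) :
  (mid V ⊗ g) ∘ (mid V ⊗ f) = mid (mtens V X).
Proof. rewrite id_tens_comp, H, tens_id; reflexivity. Qed.
Lemma whisker_r_inv {V X Y : mob M} {f : mhom X Y} {g : mhom Y X} (H : g ∘ f = 1) :
  (g ⊗ mid V) ∘ (f ⊗ mid V) = mid (mtens X V).
Proof. rewrite tens_id_comp, H, tens_id; reflexivity. Qed.

Lemma tens_unit_r_inj {X Y : mob M} (f g : mhom X Y) : f ⊗ mid munit = g ⊗ mid munit -> f = g.
Proof.
  intros H. apply (iso_cancel_r (mrunit X)); [apply iso_runit|].
  rewrite <- !runit_nat, H; reflexivity.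
Qed.
Lemma tens_unit_l_inj {X Y : mob M} (f g : mhom X Y) : mid munit ⊗ f = mid munit ⊗ g -> f = g.
Proof.
  intros H. apply (iso_cancel_r (mlunit X)); [apply iso_lunit|].
  rewrite <- !lunit_nat, H; reflexivity.
Qed.

(* Suffix [_k]: the same law precomposed with an arbitrary [k], so that it can
   rewrite inside right-nested composites [h ∘ (g ∘ (f ∘ k))]. *)
Lemma assoc_nat_k {W X X' Y Y' Z Z' : mob M} (f : mhom X X') (g : mhom Y Y') (h : mhom Z Z')
  (k : mhom W _) :
  massoc X' Y' Z' ∘ ((f ⊗ g) ⊗ h ∘ k) = (f ⊗ (g ⊗ h)) ∘ (massoc X Y Z ∘ k).
Proof. rewrite !comp_assoc, assoc_nat; reflexivity. Qed.
Lemma assoc_inv_nat_k {W X X' Y Y' Z Z' : mob M} (f : mhom X X') (g : mhom Y Y')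
  (h : mhom Z Z') (k : mhom W _) :
  massoc_inv X' Y' Z' ∘ (f ⊗ (g ⊗ h) ∘ k) = ((f ⊗ g) ⊗ h) ∘ (massoc_inv X Y Z ∘ k).
Proof. rewrite !comp_assoc, assoc_inv_nat; reflexivity. Qed.
Lemma lunit_nat_k {W X Y : mob M} (f : mhom X Y) (k : mhom W _) :
  mlunit Y ∘ ((1 ⊗ f) ∘ k) = f ∘ (mlunit X ∘ k).
Proof. rewrite !comp_assoc, lunit_nat; reflexivity. Qed.
Lemma runit_nat_k {W X Y : mob M} (f : mhom X Y) (k : mhom W _) :
  mrunit Y ∘ ((f ⊗ 1) ∘ k) = f ∘ (mrunit X ∘ k).
Proof. rewrite !comp_assoc, runit_nat; reflexivity. Qed.
Lemma runit_inv_nat_k {W X Y : mob M} (f : mhom X Y) (k : mhom W _) :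
  mrunit_inv Y ∘ (f ∘ k) = (f ⊗ 1) ∘ (mrunit_inv X ∘ k).
Proof. rewrite !comp_assoc, runit_inv_nat; reflexivity. Qed.
Lemma id_tens_comp_k {W X Y Y' Y'' : mob M} (g : mhom Y Y') (g' : mhom Y' Y'') (k : mhom W _) :
  (mid X ⊗ g') ∘ ((mid X ⊗ g) ∘ k) = (mid X ⊗ (g' ∘ g)) ∘ k.
Proof. rewrite comp_assoc, id_tens_comp; reflexivity. Qed.
Lemma tens_id_comp_k {W X X' X'' Y : mob M} (f : mhom X X') (f' : mhom X' X'') (k : mhom W _) :
  (f' ⊗ mid Y) ∘ ((f ⊗ mid Y) ∘ k) = ((f' ∘ f) ⊗ mid Y) ∘ k.
Proof. rewrite comp_assoc, tens_id_comp; reflexivity. Qed.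
Lemma id_tens_comp_r_k {W X X' Y Y' Y'' : mob M} (f : mhom X X') (h : mhom Y Y')
  (g : mhom Y' Y'') (k : mhom W _) :
  (mid X' ⊗ g) ∘ ((f ⊗ h) ∘ k) = (f ⊗ (g ∘ h)) ∘ k.
Proof. rewrite comp_assoc, id_tens_comp_r; reflexivity. Qed.
Lemma whisker_exchange_k {W X X' Y Y' : mob M} (f : mhom X X') (g : mhom Y Y') (k : mhom W _) :
  (f ⊗ mid Y') ∘ ((mid X ⊗ g) ∘ k) = (mid X' ⊗ g) ∘ ((f ⊗ mid Y) ∘ k).
Proof. rewrite !comp_assoc, whisker_exchange; reflexivity. Qed.

End MonoidalLaws.

(* [rwk L] rewrites with the equation [L] between composites, also when its
   left-hand side occurs as a prefix of a longer right-nested composite: [k_variant]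
   proves on the fly the [_k] variant of [L]. *)
Ltac append_k t k := lazymatch t with
  | mcomp ?f ?g => let g' := append_k g k in constr:(mcomp f g')
  | _ => constr:(mcomp t k) end.

Ltac k_variant L H :=
  let T := type of L in
  lazymatch T with
  | @eq (@mhom ?s ?X ?Y) ?lhs ?rhs =>
      assert (H : forall ww__ (kk__ : @mhom s ww__ X),
                 ltac:(let a := append_k lhs kk__ in let b := append_k rhs kk__ in exact (a = b)))
                by (let W := fresh in let k := fresh in intros W k;
                    let L' := fresh in pose proof L as L';
                    rewrite ?comp_assoc in L'; rewrite ?comp_assoc; rewrite L'; reflexivity)
  end.
Ltac rwk L := first [ rewrite L | let H := fresh "Hk" in k_variant L H; rewrite H; clear H ].
Ltac rwkr L := rwk (eq_sym L).
Ltac reassoc := repeat rewrite <- comp_assoc.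

Ltac cancel_inverses := repeat first
  [ rewrite (cancel_k (assoc_assoc_inv _ _ _)) | rewrite (cancel_k (assoc_inv_assoc _ _ _))
  | rewrite (cancel_k (lunit_lunit_inv _)) | rewrite (cancel_k (lunit_inv_lunit _))
  | rewrite (cancel_k (runit_runit_inv _)) | rewrite (cancel_k (runit_inv_runit _))
  | rewrite (cancel_k (sym_sym _ _))
  | rewrite (cancel_k (whisker_l_inv (assoc_assoc_inv _ _ _)))
  | rewrite (cancel_k (whisker_l_inv (assoc_inv_assoc _ _ _)))
  | rewrite (cancel_k (whisker_r_inv (assoc_assoc_inv _ _ _)))
  | rewrite (cancel_k (whisker_r_inv (assoc_inv_assoc _ _ _)))
  | rewrite (cancel_k (whisker_l_inv (sym_sym _ _)))
  | rewrite (cancel_k (whisker_r_inv (sym_sym _ _)))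
  | rewrite assoc_assoc_inv | rewrite assoc_inv_assoc | rewrite lunit_lunit_inv
  | rewrite lunit_inv_lunit | rewrite runit_runit_inv | rewrite runit_inv_runit
  | rewrite sym_sym | rewrite (whisker_l_inv (assoc_assoc_inv _ _ _))
  | rewrite (whisker_l_inv (assoc_inv_assoc _ _ _))
  | rewrite (whisker_r_inv (assoc_assoc_inv _ _ _))
  | rewrite (whisker_r_inv (assoc_inv_assoc _ _ _))
  | rewrite tens_id | rewrite comp_id_l | rewrite comp_id_r ].

Section Kelly.
Context {M : SMC}.

Lemma assoc_runit (X Y : mob M) : (mid X ⊗ mrunit Y) ∘ massoc X Y munit = mrunit (mtens X Y).
Proof.
  apply tens_unit_r_inj.
  pose proof (pentagon X Y munit munit) as P.
  apply (f_equal (fun z => (mid X ⊗ (mid Y ⊗ mlunit munit)) ∘ z)) in P.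
  rewrite (comp_assoc _ (mid X ⊗ massoc _ _ _)), id_tens_comp, triangle in P.
  rewrite comp_assoc, <- assoc_nat in P.
  rewrite (comp_assoc (mid X ⊗ (mid Y ⊗ mlunit munit))), <- assoc_nat, tens_id in P.
  reassoc. rewrite <- !comp_assoc in P.
  rewrite (triangle (mtens X Y) munit) in P.
  apply (iso_cancel_l (massoc X Y munit)); [apply iso_assoc|].
  rewrite <- P, tens_id_comp. reflexivity.
Qed.

Lemma lunit_tens (X Y : mob M) : mlunit X ⊗ mid Y = mlunit (mtens X Y) ∘ massoc munit X Y.
Proof.
  apply tens_unit_l_inj.
  apply (iso_cancel_r (massoc munit (mtens munit X) Y ∘ (massoc munit munit X ⊗ mid Y))).
  { apply iso_comp; [apply iso_tensm; [apply iso_assoc|apply iso_id]|apply iso_assoc]. }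
  rewrite <- id_tens_comp. reassoc. rewrite (pentagon munit munit X Y).
  rwk (triangle munit (mtens X Y)). rewrite <- (tens_id X Y).
  rwkr (assoc_nat (mrunit munit) (mid X) (mid Y)).
  rewrite <- triangle, <- tens_id_comp. reassoc.
  rwkr (assoc_nat (mid munit) (mlunit X) (mid Y)). reflexivity.
Qed.

Lemma lunit_unit : mlunit (s:=M) munit = mrunit munit.
Proof.
  apply tens_unit_r_inj.
  rewrite <- triangle, lunit_tens.
  assert (E : mid (s:=M) munit ⊗ mlunit munit = mlunit (mtens munit munit)).
  { apply (iso_cancel_l (mlunit munit)); [apply iso_lunit|]. rewrite lunit_nat. reflexivity. }
  rewrite E. reflexivity.
Qed.

Lemma lunit_sym (X : mob M) : mlunit X ∘ msym X munit = mrunit X.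
Proof.
  apply tens_unit_r_inj.
  rewrite <- tens_id_comp. apply (iso_cancel_l (msym X munit)); [apply iso_sym|].
  rewrite <- triangle. rwk (sym_nat (mid X) (mlunit munit)). rewrite !lunit_tens. reassoc.
  rwkr (lunit_nat (msym X munit)). rwkr (hexagon X munit munit). reflexivity.
Qed.

Lemma runit_sym (X : mob M) : mrunit X ∘ msym munit X = mlunit X.
Proof.
  rewrite <- lunit_sym, <- comp_assoc, sym_sym, comp_id_r. reflexivity.
Qed.

Lemma sym_unit_unit : msym (s:=M) munit munit = mid _.
Proof.
  apply (iso_cancel_l (mlunit munit)); [apply iso_lunit|].
  rewrite lunit_sym, comp_id_r, lunit_unit. reflexivity.
Qed.

Lemma runit_assoc_inv (X Y : mob M) :
  mrunit (mtens X Y) ∘ massoc_inv X Y munit = mid X ⊗ mrunit Y.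
Proof. rewrite <- assoc_runit. reassoc. cancel_inverses. reflexivity. Qed.
Lemma lunit_tens_assoc_inv (X Y : mob M) :
  (mlunit X ⊗ mid Y) ∘ massoc_inv munit X Y = mlunit (mtens X Y).
Proof. rewrite lunit_tens. reassoc. cancel_inverses. reflexivity. Qed.
Lemma triangle_assoc_inv (X Y : mob M) :
  (mrunit X ⊗ mid Y) ∘ massoc_inv X munit Y = mid X ⊗ mlunit Y.
Proof. rewrite <- triangle. reassoc. cancel_inverses. reflexivity. Qed.
End Kelly.

(* Rearrangements of the pentagon; a name lists the arrows left of [=], with
   [a], [ai] for massoc, massoc_inv and a [1] marking the side tensored with mid. *)
Section Pentagon.
Context {M : SMC}.

Lemma pentagon_ai_ai_1a (W X Y Z : mob M) :
  massoc_inv (mtens W X) Y Z ∘ (massoc_inv W X (mtens Y Z) ∘ (mid W ⊗ massoc X Y Z))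
  = (massoc_inv W X Y ⊗ mid Z) ∘ massoc_inv W (mtens X Y) Z.
Proof.
  apply (iso_cancel_l (massoc W X (mtens Y Z) ∘ massoc (mtens W X) Y Z)).
  { apply iso_comp; apply iso_assoc. }
  reassoc. cancel_inverses. rwkr (pentagon W X Y Z). cancel_inverses. reflexivity.
Qed.
Lemma pentagon_inv (W X Y Z : mob M) :
  (massoc_inv W X Y ⊗ mid Z) ∘ (massoc_inv W (mtens X Y) Z ∘ (mid W ⊗ massoc_inv X Y Z))
  = massoc_inv (mtens W X) Y Z ∘ massoc_inv W X (mtens Y Z).
Proof.
  apply (iso_cancel_l (massoc W X (mtens Y Z) ∘ massoc (mtens W X) Y Z)).
  { apply iso_comp; apply iso_assoc. }
  reassoc. cancel_inverses. rwkr (pentagon W X Y Z). cancel_inverses. reflexivity.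
Qed.
Lemma pentagon_ai_1a (W X Y Z : mob M) :
  massoc_inv W X (mtens Y Z) ∘ (mid W ⊗ massoc X Y Z)
  = massoc (mtens W X) Y Z ∘ ((massoc_inv W X Y ⊗ mid Z) ∘ massoc_inv W (mtens X Y) Z).
Proof.
  rewrite <- pentagon_ai_ai_1a. reassoc. cancel_inverses. reflexivity.
Qed.
Lemma pentagon_ai_1ai_a (W X Y Z : mob M) :
  massoc_inv W (mtens X Y) Z ∘ ((mid W ⊗ massoc_inv X Y Z) ∘ massoc W X (mtens Y Z))
  = (massoc W X Y ⊗ mid Z) ∘ massoc_inv (mtens W X) Y Z.
Proof.
  apply (iso_cancel_l (massoc_inv W X Y ⊗ mid Z)).
  { apply iso_tensm; [apply iso_assoc_inv | apply iso_id]. }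
  rwk (pentagon_inv W X Y Z). cancel_inverses. reflexivity.
Qed.
Lemma pentagon_1ai_a (W X Y Z : mob M) :
  (mid W ⊗ massoc_inv X Y Z) ∘ massoc W X (mtens Y Z)
  = massoc W (mtens X Y) Z ∘ ((massoc W X Y ⊗ mid Z) ∘ massoc_inv (mtens W X) Y Z).
Proof.
  rewrite <- pentagon_ai_1ai_a. cancel_inverses. reflexivity.
Qed.
Lemma pentagon_ai_1ai (W X Y Z : mob M) :
  massoc_inv W (mtens X Y) Z ∘ (mid W ⊗ massoc_inv X Y Z)
  = (massoc W X Y ⊗ mid Z) ∘ (massoc_inv (mtens W X) Y Z ∘ massoc_inv W X (mtens Y Z)).
Proof.
  rewrite <- pentagon_inv. cancel_inverses. reflexivity.
Qed.
Lemma pentagon_a_ai1 (W X Y Z : mob M) :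
  massoc (mtens W X) Y Z ∘ (massoc_inv W X Y ⊗ mid Z)
  = massoc_inv W X (mtens Y Z) ∘ ((mid W ⊗ massoc X Y Z) ∘ massoc W (mtens X Y) Z).
Proof.
  apply (iso_cancel_l (massoc W X (mtens Y Z))); [apply iso_assoc|].
  reassoc. rwkr (pentagon W X Y Z). cancel_inverses. reflexivity.
Qed.
End Pentagon.

Section Interchange.
Context {M : SMC}.

(* The coherence of [canon] is derived from that of [tau] through [canon_via_tau]. *)
Definition tau (X Y Z : mob M) : mhom (mtens X (mtens Y Z)) (mtens Y (mtens X Z)) :=
  massoc Y X Z ∘ ((msym X Y ⊗ mid Z) ∘ massoc_inv X Y Z).

Lemma canon_via_tau (W X Y Z : mob M) :
  canon M W X Y Z
  = massoc_inv W Y (mtens X Z) ∘ ((mid W ⊗ tau X Y Z) ∘ massoc W X (mtens Y Z)).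
Proof. unfold canon, tau. rewrite <- !id_tens_comp. reassoc. reflexivity. Qed.

Lemma sym_tens_id_nat {X X' Y Y' Z Z' : mob M} (x : mhom X X') (y : mhom Y Y') (z : mhom Z Z') :
  (msym X' Y' ⊗ mid Z') ∘ ((x ⊗ y) ⊗ z) = ((y ⊗ x) ⊗ z) ∘ (msym X Y ⊗ mid Z).
Proof. rewrite <- !tens_comp, sym_nat, comp_id_l, comp_id_r. reflexivity. Qed.
Lemma sym_tens_id_nat_k {W X X' Y Y' Z Z' : mob M} (x : mhom X X') (y : mhom Y Y')
  (z : mhom Z Z') (k : mhom W _) :
  (msym X' Y' ⊗ mid Z') ∘ (((x ⊗ y) ⊗ z) ∘ k)
  = ((y ⊗ x) ⊗ z) ∘ ((msym X Y ⊗ mid Z) ∘ k).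
Proof. rewrite !comp_assoc, sym_tens_id_nat. reflexivity. Qed.

Lemma tau_nat {X X' Y Y' Z Z' : mob M} (x : mhom X X') (y : mhom Y Y') (z : mhom Z Z') :
  tau X' Y' Z' ∘ (x ⊗ (y ⊗ z)) = (y ⊗ (x ⊗ z)) ∘ tau X Y Z.
Proof. unfold tau. reassoc. rewrite assoc_inv_nat, sym_tens_id_nat_k, assoc_nat_k. reflexivity. Qed.
Lemma tau_nat_k {W X X' Y Y' Z Z' : mob M} (x : mhom X X') (y : mhom Y Y') (z : mhom Z Z')
  (k : mhom W _) :
  tau X' Y' Z' ∘ ((x ⊗ (y ⊗ z)) ∘ k) = (y ⊗ (x ⊗ z)) ∘ (tau X Y Z ∘ k).
Proof. rewrite !comp_assoc, tau_nat. reflexivity. Qed.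

Lemma tau_invol (X Y Z : mob M) : tau Y X Z ∘ tau X Y Z = mid _.
Proof. unfold tau. reassoc. cancel_inverses. reflexivity. Qed.

Lemma sym_tens_r (X Y Z : mob M) :
  msym X (mtens Y Z) = massoc_inv Y Z X ∘ ((mid Y ⊗ msym X Z) ∘ tau X Y Z).
Proof.
  unfold tau. rwkr (hexagon X Y Z). cancel_inverses. reflexivity.
Qed.

Lemma sym_tens_l (X Y Z : mob M) :
  msym (mtens X Y) Z = massoc Z X Y ∘ ((msym X Z ⊗ mid Y) ∘
     (massoc_inv X Z Y ∘ ((mid X ⊗ msym Y Z) ∘ massoc X Y Z))).
Proof.
  apply (iso_cancel_l (msym Z (mtens X Y))); [apply iso_sym|].
  rewrite sym_sym, sym_tens_r. unfold tau. reassoc. cancel_inverses. reflexivity.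
Qed.

Lemma tau_tens_r (X Y Z W : mob M) :
  tau X Y (mtens Z W) = (mid Y ⊗ massoc X Z W) ∘ (massoc Y (mtens X Z) W ∘
    ((tau X Y Z ⊗ mid W) ∘ (massoc_inv X (mtens Y Z) W ∘ (mid X ⊗ massoc_inv Y Z W)))).
Proof.
  unfold tau. rewrite <- !tens_id_comp. reassoc.
  rwk (pentagon Y X Z W). rwk (pentagon_inv X Y Z W). rewrite assoc_nat_k. cancel_inverses.
  reflexivity.
Qed.

Lemma tau_tens_l (X1 X2 Y Z : mob M) :
  tau (mtens X1 X2) Y Z = (mid Y ⊗ massoc_inv X1 X2 Z) ∘ (tau X1 Y (mtens X2 Z) ∘
     ((mid X1 ⊗ tau X2 Y Z) ∘ massoc X1 X2 (mtens Y Z))).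
Proof.
  unfold tau. rewrite sym_tens_l. rewrite <- !tens_id_comp. rewrite <- !id_tens_comp. reassoc.
  rwk (pentagon_1ai_a Y X1 X2 Z). rewrite <- (tens_id X2 Z). rewrite assoc_inv_nat_k.
  rwk (pentagon_ai_ai_1a X1 Y X2 Z). rewrite assoc_inv_nat_k. rwk (pentagon_ai_1ai_a X1 X2 Y Z).
  reflexivity.
Qed.

Lemma tau_tens_m (X Y1 Y2 Z : mob M) :
  tau X (mtens Y1 Y2) Z = massoc_inv Y1 Y2 (mtens X Z) ∘ ((mid Y1 ⊗ tau X Y2 Z) ∘
     (tau X Y1 (mtens Y2 Z) ∘ (mid X ⊗ massoc Y1 Y2 Z))).
Proof.
  unfold tau at 1. rewrite sym_tens_r. unfold tau. rewrite <- !tens_id_comp.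
  rewrite <- !id_tens_comp. reassoc.
  rwk (pentagon_ai_1a Y1 Y2 X Z). rewrite assoc_inv_nat_k. rwk (pentagon_ai_1ai_a Y1 X Y2 Z).
  rewrite <- (tens_id Y2 Z). rewrite assoc_inv_nat_k. rwk (pentagon_ai_ai_1a X Y1 Y2 Z).
  reflexivity.
Qed.

Lemma assoc_tau_tens_id (A Y B V : mob M) :
  massoc Y (mtens A B) V ∘ (tau A Y B ⊗ mid V) =
  (mid Y ⊗ massoc_inv A B V)
  ∘ (tau A Y (mtens B V) ∘ ((mid A ⊗ massoc Y B V) ∘ massoc A (mtens Y B) V)).
Proof.
  rewrite tau_tens_r. reassoc. cancel_inverses. reflexivity.
Qed.

Lemma canon_assoc (X A Y B Z C : mob M) :
  (massoc X Y Z ⊗ massoc A B C)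
  ∘ (canon M (mtens X Y) (mtens A B) Z C ∘ (canon M X A Y B ⊗ mid (mtens Z C)))
  = canon M X A (mtens Y Z) (mtens B C) ∘ ((mid (mtens X A) ⊗ canon M Y B Z C) ∘
      massoc (mtens X A) (mtens Y B) (mtens Z C)).
Proof.
  rewrite !canon_via_tau. rewrite <- !tens_id_comp. rewrite <- !id_tens_comp. reassoc.
  rewrite <- (tens_id X A). rewrite !assoc_nat_k.
  rewrite tau_tens_m. rewrite <- !id_tens_comp. reassoc.
  rewrite (cancel_k (whisker_l_inv (whisker_l_inv (assoc_assoc_inv _ _ _)))).
  rwk (id_tens_comp (X:=X) (mid A ⊗ (mid Y ⊗ tau B Z C)) (tau A Y (mtens Z (mtens B C)))).
  rewrite tau_nat. rewrite <- id_tens_comp. reassoc.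
  rwk (pentagon_a_ai1 X Y (mtens A B) (mtens Z C)). rewrite assoc_nat_k.
  rwk (id_tens_comp (X:=X) (tau A Y B ⊗ mid (mtens Z C)) (massoc Y (mtens A B) (mtens Z C))).
  rewrite assoc_tau_tens_id. rewrite <- !id_tens_comp. reassoc.
  rwk (pentagon X A (mtens Y B) (mtens Z C)).
  rwkr (assoc_nat (mid X) (mid A) (massoc Y B (mtens Z C))).
  rewrite <- (tens_id X Y). rewrite <- assoc_inv_nat_k.
  rewrite tau_tens_l. rewrite <- !id_tens_comp. reassoc.
  rewrite (cancel_k (whisker_l_inv (whisker_l_inv (assoc_assoc_inv _ _ _)))).
  rewrite (tens_split_l (massoc X Y Z) (massoc A B C)). reassoc.
  rewrite <- (tens_id (mtens X Y) Z). rewrite <- assoc_inv_nat_k.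
  rewrite <- (tens_id X Y). rewrite <- assoc_inv_nat_k.
  rewrite (cancel_k (whisker_l_inv (whisker_l_inv (whisker_l_inv (assoc_assoc_inv _ _ _))))).
  rwkr (pentagon_ai_1ai X Y Z (mtens A (mtens B C))).
  reflexivity.
Qed.

Lemma canon_nat {W W' X X' Y Y' Z Z' : mob M} (w : mhom W W') (x : mhom X X') (y : mhom Y Y')
  (z : mhom Z Z') :
  canon M W' X' Y' Z' ∘ ((w ⊗ x) ⊗ (y ⊗ z)) = ((w ⊗ y) ⊗ (x ⊗ z)) ∘ canon M W X Y Z.
Proof.
  rewrite !canon_via_tau. reassoc. rewrite assoc_nat.
  rewrite (comp_assoc (mid W' ⊗ tau X' Y' Z')), id_tens_comp_r, tau_nat, tens_comp_r_split,
    <- comp_assoc.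
  rewrite assoc_inv_nat_k. reflexivity.
Qed.

Lemma canon_invol (W X Y Z : mob M) : canon M W Y X Z ∘ canon M W X Y Z = mid _.
Proof.
  rewrite !canon_via_tau. reassoc. cancel_inverses.
  rewrite (cancel_k (whisker_l_inv (tau_invol _ _ _))). cancel_inverses. reflexivity.
Qed.

Lemma tau_unit_m (X Z : mob M) : mlunit (mtens X Z) ∘ tau X munit Z = mid X ⊗ mlunit Z.
Proof.
  unfold tau. reassoc. rwkr (lunit_tens X Z). rewrite tens_id_comp_k, lunit_sym, triangle_assoc_inv.
  reflexivity.
Qed.
Lemma tau_unit_l (Y Z : mob M) : (mid Y ⊗ mlunit Z) ∘ tau munit Y Z = mlunit (mtens Y Z).
Proof.
  unfold tau. reassoc. rwk (triangle Y Z). rewrite tens_id_comp_k, runit_sym, lunit_tens_assoc_inv.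
  reflexivity.
Qed.

Lemma runit_tens_canon (Y Y' : mob M) :
  mrunit (mtens Y Y') ∘ ((mid (mtens Y Y') ⊗ mlunit munit) ∘ canon M Y munit Y' munit)
  = mrunit Y ⊗ mrunit Y'.
Proof.
  rewrite (tens_split_l (mrunit Y)), <- triangle. reassoc. rewrite <- (tens_id Y munit), assoc_nat.
  rewrite id_tens_comp_k, lunit_nat.
  rewrite canon_via_tau. rewrite <- (tens_id Y Y'), <- assoc_inv_nat_k. rwk (runit_assoc_inv Y Y').
  rewrite !id_tens_comp_k. reassoc. rwk (tau_unit_l Y' munit). reflexivity.
Qed.

Lemma canon_lunit (Y A : mob M) :
  (mid Y ⊗ mlunit A) ∘ ((mlunit Y ⊗ mid (mtens munit A)) ∘ (canon M munit munit Y A ∘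
    (mrunit_inv munit ⊗ mid (mtens Y A)))) = mlunit (mtens Y A).
Proof.
  rewrite comp_assoc, <- tens_comp, comp_id_l, comp_id_r, tens_split_l. rewrite canon_via_tau.
  reassoc.
  rewrite <- (tens_id munit Y), <- assoc_inv_nat_k. rwk (lunit_tens_assoc_inv Y A).
  rewrite id_tens_comp_k, tau_unit_l. rwk (triangle munit (mtens Y A)).
  rewrite tens_id_comp, runit_runit_inv, tens_id, comp_id_r. reflexivity.
Qed.

Lemma canon_runit (Y A : mob M) :
  (mid Y ⊗ mrunit A) ∘ ((mrunit Y ⊗ mid (mtens A munit)) ∘ (canon M Y A munit munit ∘
    (mid (mtens Y A) ⊗ mrunit_inv munit))) = mrunit (mtens Y A).
Proof.
  rewrite comp_assoc, <- tens_comp, comp_id_l, comp_id_r, tens_split_l. rewrite canon_via_tau.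
  reassoc.
  rewrite <- (tens_id Y munit), <- assoc_inv_nat_k. rwk (triangle_assoc_inv Y A).
  rewrite !id_tens_comp_k. reassoc. rewrite lunit_nat_k. rewrite tau_unit_m. rewrite lunit_unit.
  rewrite <- (tens_id Y A), assoc_nat, id_tens_comp_k. reassoc.
  rewrite id_tens_comp, runit_runit_inv, tens_id, comp_id_r.
  apply assoc_runit.
Qed.

Lemma tau_assoc_sym (Z W X : mob M) :
  tau Z W X ∘ (massoc Z W X ∘ (msym W Z ⊗ mid X)) = massoc W Z X.
Proof.
  unfold tau. reassoc. cancel_inverses. rewrite (whisker_r_inv (sym_sym _ _)), comp_id_r.
  reflexivity.
Qed.
Lemma assoc_inv_tau (W Y V : mob M) :
  massoc_inv Y W V ∘ tau W Y V = (msym W Y ⊗ mid V) ∘ massoc_inv W Y V.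
Proof. unfold tau. reassoc. cancel_inverses. reflexivity. Qed.

Lemma canon_sym (W X Y Z : mob M) :
  (msym W Y ⊗ msym X Z) ∘ canon M W X Y Z = canon M Y Z W X ∘ msym (mtens W X) (mtens Y Z).
Proof.
  rewrite sym_tens_l, !sym_tens_r, !canon_via_tau. rewrite <- !tens_id_comp, <- !id_tens_comp.
  reassoc.
  rwkr (pentagon Y Z W X). cancel_inverses. rewrite assoc_nat_k.
  rwk (id_tens_comp (X:=Y) (msym W Z ⊗ mid X) (massoc Z W X)).
  rwk (id_tens_comp (X:=Y) (massoc Z W X ∘ (msym W Z ⊗ mid X)) (tau Z W X)).
  rewrite tau_assoc_sym. rwkr (tau_tens_r W Y Z X).
  rewrite tau_nat_k, assoc_inv_nat_k. rwk (assoc_inv_tau W Y (mtens X Z)).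
  rewrite tens_id. rwkr (tens_split_r (msym W Y) (msym X Z)). reflexivity.
Qed.
Lemma iso_canon (W X Y Z : mob M) : is_iso M (canon M W X Y Z).
Proof. exists (canon M W Y X Z); split; apply canon_invol. Qed.

Lemma canon_unit_unit_r (Y Y' : mob M) :
  (mid (mtens Y Y') ⊗ mlunit munit) ∘ canon M Y munit Y' munit
  = mrunit_inv (mtens Y Y') ∘ (mrunit Y ⊗ mrunit Y').
Proof. rewrite <- runit_tens_canon. cancel_inverses. reflexivity. Qed.

Lemma canon_assoc_comp (Z Z' B B' A A' : mob M) :
  (mid (mtens Z Z') ⊗ canon M B A B' A') ∘ (canon M Z (mtens B A) Z' (mtens B' A') ∘
     (massoc Z B A ⊗ massoc Z' B' A'))
  = massoc (mtens Z Z') (mtens B B') (mtens A A') ∘ ((canon M Z B Z' B' ⊗ mid _) ∘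
     canon M (mtens Z B) A (mtens Z' B') A').
Proof.
  apply (iso_cancel_r (canon M (mtens Z B) (mtens Z' B') A A' ∘ (canon M Z Z' B B' ⊗ mid _))).
  { apply iso_comp; [apply iso_tensm; [apply iso_canon|apply iso_id]|apply iso_canon]. }
  reassoc. rewrite (cancel_k (canon_invol _ _ _ _)), tens_id_comp, canon_invol, tens_id, comp_id_r.
  rwk (canon_assoc Z Z' B B' A A').
  rewrite (cancel_k (canon_invol _ _ _ _)), (cancel_k (whisker_l_inv (canon_invol _ _ _ _))).
  reflexivity.
Qed.

Lemma canon_nat_k {V W W' X X' Y Y' Z Z' : mob M} (w : mhom W W') (x : mhom X X')
  (y : mhom Y Y') (z : mhom Z Z') (k : mhom V _) :
  canon M W' X' Y' Z' ∘ (((w ⊗ x) ⊗ (y ⊗ z)) ∘ k)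
  = ((w ⊗ y) ⊗ (x ⊗ z)) ∘ (canon M W X Y Z ∘ k).
Proof. rewrite !comp_assoc, canon_nat. reflexivity. Qed.
Lemma canon_unit_unit (Y A : mob M) : canon M Y munit munit A = mid _.
Proof.
  rewrite canon_via_tau. unfold tau.
  rewrite sym_unit_unit, tens_id, comp_id_l, assoc_assoc_inv, tens_id, comp_id_l, assoc_inv_assoc.
  reflexivity.
Qed.

End Interchange.

Section Whiskering.
Context {M : SMC}.

Definition unit_cancel {Y' Y : mob M} (e : mhom (mtens Y' Y) munit) (W : mob M) :
  mhom (mtens Y' (mtens Y W)) W :=
  mlunit W ∘ ((e ⊗ mid W) ∘ massoc_inv Y' Y W).

Lemma unit_cancel_nat {Y' Y W W' : mob M} (e : mhom (mtens Y' Y) munit) (x : mhom W W') :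
  unit_cancel e W' ∘ (mid Y' ⊗ (mid Y ⊗ x)) = x ∘ unit_cancel e W.
Proof.
  unfold unit_cancel. reassoc.
  rewrite assoc_inv_nat, (comp_assoc (e ⊗ mid W')), <- tens_comp, tens_id, comp_id_r,
    comp_id_l, (tens_split_r e x).
  reassoc. rewrite lunit_nat_k. reflexivity.
Qed.

Lemma iso_unit_cancel {Y' Y : mob M} (e : mhom (mtens Y' Y) munit) (W : mob M) :
  is_iso M e -> is_iso M (unit_cancel e W).
Proof.
  intros He. apply iso_comp; [apply iso_comp|apply iso_lunit];
    [apply iso_assoc_inv|apply iso_tensm; [exact He|apply iso_id]].
Qed.

Lemma whisker_l_inj (Y Y' : mob M) (e : mhom (mtens Y Y') munit) (He : is_iso M e)
  {P Q : mob M} (z1 z2 : mhom P Q) : mid Y' ⊗ z1 = mid Y' ⊗ z2 -> z1 = z2.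
Proof.
  intros H. apply (iso_cancel_r (unit_cancel e P)); [apply iso_unit_cancel, He|].
  rewrite <- !unit_cancel_nat, H. reflexivity.
Qed.

Lemma whisker_l_full (Y : mob M) (HY : weakly_invertible M Y) {U V : mob M}
  (h : mhom (mtens Y U) (mtens Y V)) :
  exists al : mhom U V, mid Y ⊗ al = h /\ (is_iso M h -> is_iso M al).
Proof.
  destruct HY as [Y' [[e1 He1] [e2 He2]]].
  destruct (iso_unit_cancel e2 U He2) as [cU [HcU1 HcU2]].
  exists (unit_cancel e2 V ∘ ((mid Y' ⊗ h) ∘ cU)). split.
  - apply (whisker_l_inj Y Y' e1 He1), (iso_cancel_l (unit_cancel e2 V));
      [apply iso_unit_cancel, He2|].
    rewrite unit_cancel_nat. reassoc. rewrite HcU1, comp_id_r. reflexivity.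
  - intros Hh. apply iso_comp; [apply iso_comp|apply iso_unit_cancel, He2].
    + exists (unit_cancel e2 U); split; assumption.
    + apply iso_tensm; [apply iso_id|exact Hh].
Qed.

Lemma wi_of_tens_unit (X Z : mob M) : isomorphic M (mtens X Z) munit -> weakly_invertible M X.
Proof.
  intros H. exists Z. split; [exact H|].
  eapply isomorphic_trans; [|exact H]. exists (msym Z X). apply iso_sym.
Qed.

End Whiskering.

Section PClasses.
Context {M : SMC}.

Definition rep {X Y : mob M} (A : wob M) (f : mhom X (mtens Y (proj1_sig A))) : prep M X Y :=
  existT (fun A : wob M => mhom X (mtens Y (proj1_sig A))) A f.

Lemma prel_intro {X Y : mob M} (A A' : wob M) (f : mhom X (mtens Y (proj1_sig A)))
  (f' : mhom X (mtens Y (proj1_sig A'))) (al : mhom (proj1_sig A) (proj1_sig A')) :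
  is_iso M al -> (mid Y ⊗ al) ∘ f = f' -> prel M (rep A f) (rep A' f').
Proof. intros H1 H2. exists al. split; assumption. Qed.

Lemma prel_refl {X Y : mob M} (r : prep M X Y) : prel M r r.
Proof. exists (mid _). split; [apply iso_id|]. rewrite tens_id, comp_id_l. reflexivity. Qed.
Lemma prel_sym {X Y : mob M} (r s : prep M X Y) : prel M r s -> prel M s r.
Proof.
  intros [al [[al' [H1 H2]] H]]. exists al'. split.
  - exists al. split; assumption.
  - rewrite <- H, comp_assoc, id_tens_comp, H1, tens_id, comp_id_l. reflexivity.
Qed.
Lemma prel_trans {X Y : mob M} (r s t : prep M X Y) : prel M r s -> prel M s t -> prel M r t.
Proof.
  intros [al [Ha H]] [be [Hb H']]. exists (be ∘ al). split.
  - apply iso_comp; assumption.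
  - rewrite <- id_tens_comp, <- comp_assoc, H, H'. reflexivity.
Qed.

Lemma pmk_eq {X Y : mob M} (r s : prep M X Y) : prel M r s -> pmk M r = pmk M s.
Proof.
  intros H. unfold pmk. apply subset_eq_compat. unfold pcls.
  apply functional_extensionality. intros t. apply propositional_extensionality. split; intros H'.
  - apply (prel_trans _ r); [apply prel_sym|]; assumption.
  - apply (prel_trans _ s); assumption.
Qed.
Lemma pmk_inj {X Y : mob M} (r s : prep M X Y) : pmk M r = pmk M s -> prel M r s.
Proof.
  intros H. apply (f_equal (@proj1_sig _ _)) in H. simpl in H. unfold pcls in H.
  apply (f_equal (fun P => P s)) in H. rewrite H. apply prel_refl.
Qed.
Lemma pmk_prep_of {X Y : mob M} (S : phom M X Y) : pmk M (prep_of M S) = S.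
Proof.
  unfold prep_of. destruct (constructive_indefinite_description _ _) as [r0 E]. simpl.
  destruct S as [P HP]. simpl in E. subst P. unfold pmk. apply subset_eq_compat. reflexivity.
Qed.
Lemma prep_of_pmk {X Y : mob M} (r : prep M X Y) : prel M r (prep_of M (pmk M r)).
Proof. apply pmk_inj. rewrite pmk_prep_of. reflexivity. Qed.

Lemma rcomp_prel_l {X Y Z : mob M} (r r' : prep M Y Z) (s : prep M X Y) :
  prel M r r' -> prel M (rcomp M r s) (rcomp M r' s).
Proof.
  destruct r as [B g], r' as [B' g'], s as [A f]. intros [be [Hb H]]. simpl in *.
  apply (prel_intro (wtens M B A) (wtens M B' A) _ _ (be ⊗ mid _)).
  { apply iso_tensm; [assumption|apply iso_id]. }
  simpl. reassoc. rewrite <- assoc_nat_k. rewrite tens_id_comp_k, H. reflexivity.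
Qed.
Lemma rcomp_prel_r {X Y Z : mob M} (r : prep M Y Z) (s s' : prep M X Y) :
  prel M s s' -> prel M (rcomp M r s) (rcomp M r s').
Proof.
  destruct r as [B g], s' as [A' f'], s as [A f]. intros [al [Ha H]]. simpl in *.
  apply (prel_intro (wtens M B A) (wtens M B A') _ _ (mid _ ⊗ al)).
  { apply iso_tensm; [apply iso_id|assumption]. }
  simpl. reassoc. rewrite <- assoc_nat_k. rewrite tens_id. rewrite <- H.
  rewrite (comp_assoc (mid _ ⊗ al)), (comp_assoc (g ⊗ mid _)), <- tens_split_l, <- tens_split_r.
  reflexivity.
Qed.
Lemma rtens_prel_l {X Y X' Y' : mob M} (r r' : prep M X Y) (s : prep M X' Y') :
  prel M r r' -> prel M (rtens M r s) (rtens M r' s).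
Proof.
  destruct r as [A f], r' as [A' f'], s as [B g]. intros [al [Ha H]]. simpl in *.
  apply (prel_intro (wtens M A B) (wtens M A' B) _ _ (al ⊗ mid _)).
  { apply iso_tensm; [assumption|apply iso_id]. }
  simpl. rewrite <- (tens_id Y Y'). fold (canon M Y (proj1_sig A') Y' (proj1_sig B)).
  fold (canon M Y (proj1_sig A) Y' (proj1_sig B)).
  rewrite comp_assoc, <- canon_nat, <- comp_assoc, <- tens_comp, H, tens_id, comp_id_l. reflexivity.
Qed.
Lemma rtens_prel_r {X Y X' Y' : mob M} (r : prep M X Y) (s s' : prep M X' Y') :
  prel M s s' -> prel M (rtens M r s) (rtens M r s').
Proof.
  destruct r as [A f], s' as [B' g'], s as [B g]. intros [al [Ha H]]. simpl in *.
  apply (prel_intro (wtens M A B) (wtens M A B') _ _ (mid _ ⊗ al)).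
  { apply iso_tensm; [apply iso_id|assumption]. }
  simpl. rewrite <- (tens_id Y Y'). fold (canon M Y (proj1_sig A) Y' (proj1_sig B')).
  fold (canon M Y (proj1_sig A) Y' (proj1_sig B)).
  rewrite comp_assoc, <- canon_nat, <- comp_assoc, <- tens_comp, H, tens_id, comp_id_l. reflexivity.
Qed.

Lemma pcomp_pmk {X Y Z : mob M} (r : prep M Y Z) (s : prep M X Y) :
  pcomp M (pmk M r) (pmk M s) = pmk M (rcomp M r s).
Proof.
  unfold pcomp. apply pmk_eq. apply (prel_trans _ (rcomp M r (prep_of M (pmk M s)))).
  - apply rcomp_prel_l, prel_sym, prep_of_pmk.
  - apply rcomp_prel_r, prel_sym, prep_of_pmk.
Qed.
Lemma ptensm_pmk {X Y X' Y' : mob M} (r : prep M X Y) (s : prep M X' Y') :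
  ptensm M (pmk M r) (pmk M s) = pmk M (rtens M r s).
Proof.
  unfold ptensm. apply pmk_eq. apply (prel_trans _ (rtens M r (prep_of M (pmk M s)))).
  - apply rtens_prel_l, prel_sym, prep_of_pmk.
  - apply rtens_prel_r, prel_sym, prep_of_pmk.
Qed.

Lemma pid_pmk (X : mob M) : pid M X = pmk M (rep (wunit M) (mrunit_inv X)).
Proof. reflexivity. Qed.
Lemma pmk_surj {X Y : mob M} (S : phom M X Y) : exists A f, S = pmk M (rep A f).
Proof. rewrite <- (pmk_prep_of S). destruct (prep_of M S) as [A f]. exists A, f. reflexivity. Qed.

End PClasses.

Section PCategory.
Context {M : SMC}.

Definition rep_pi {X Y : mob M} (f : mhom X Y) : prep M X Y := rep (wunit M) (mrunit_inv Y ∘ f).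

Lemma pi_m_rep {X Y : mob M} (f : mhom X Y) : pi_m M f = pmk M (rep_pi f).
Proof. reflexivity. Qed.
Lemma pid_pi_m (X : mob M) : pid M X = pi_m M (mid X).
Proof. unfold pid, pi_m. rewrite comp_id_r. reflexivity. Qed.

Lemma rcomp_pi_l {X Y Z : mob M} (h : mhom Y Z) (A : wob M) (f : mhom X (mtens Y (proj1_sig A))) :
  prel M (rcomp M (rep_pi h) (rep A f)) (rep A ((h ⊗ mid _) ∘ f)).
Proof.
  apply (prel_intro (wtens M (wunit M) A) A _ _ (mlunit _)); [apply iso_lunit|]. simpl.
  rwk (triangle Z (proj1_sig A)). rewrite tens_id_comp_k. reassoc.
  rewrite (cancel_k (runit_runit_inv _)). reflexivity.
Qed.
Lemma rcomp_pi_r {X Y Z : mob M} (B : wob M) (g : mhom Y (mtens Z (proj1_sig B))) (h : mhom X Y) :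
  prel M (rcomp M (rep B g) (rep_pi h)) (rep B (g ∘ h)).
Proof.
  apply (prel_intro (wtens M B (wunit M)) B _ _ (mrunit _)); [apply iso_runit|]. simpl.
  rwk (assoc_runit Z (proj1_sig B)). rewrite runit_nat_k, (cancel_k (runit_runit_inv _)).
  reflexivity.
Qed.
Lemma rcomp_assoc {X Y Z W : mob M} (r : prep M Z W) (s : prep M Y Z) (t : prep M X Y) :
  prel M (rcomp M r (rcomp M s t)) (rcomp M (rcomp M r s) t).
Proof.
  destruct r as [C h], s as [B g], t as [A f].
  apply (prel_intro (wtens M C (wtens M B A)) (wtens M (wtens M C B) A) _ _
    (massoc_inv (proj1_sig C) (proj1_sig B) (proj1_sig A))); [apply iso_assoc_inv|]. simpl.
  rewrite <- !tens_id_comp. reassoc. rewrite <- (tens_id (proj1_sig B) (proj1_sig A)).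
  rewrite <- (assoc_nat_k h).
  rwkr (pentagon W (proj1_sig C) (proj1_sig B) (proj1_sig A)). cancel_inverses. reflexivity.
Qed.

Lemma pcomp_pi_m {X Y Z : mob M} (g : mhom Y Z) (f : mhom X Y) :
  pcomp M (pi_m M g) (pi_m M f) = pi_m M (g ∘ f).
Proof.
  rewrite !pi_m_rep, pcomp_pmk. apply pmk_eq. eapply prel_trans; [apply rcomp_pi_l|].
  unfold rep_pi. simpl. rewrite <- runit_inv_nat_k. apply prel_refl.
Qed.

Lemma ptensm_pi_m {X Y X' Y' : mob M} (f : mhom X Y) (g : mhom X' Y') :
  ptensm M (pi_m M f) (pi_m M g) = pi_m M (f ⊗ g).
Proof.
  rewrite !pi_m_rep, ptensm_pmk. apply pmk_eq.
  apply (prel_intro (wtens M (wunit M) (wunit M)) (wunit M) _ _ (mlunit munit)); [apply iso_lunit|].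
  simpl. rewrite comp_assoc, canon_unit_unit_r. reassoc. rewrite <- tens_comp. reassoc.
  rewrite !(cancel_k (runit_runit_inv _)). reflexivity.
Qed.

(* Interchange in P(M): the error terms (B ⊗ A) ⊗ (B' ⊗ A') and (B ⊗ B') ⊗ (A ⊗ A') of
   the two sides are matched by [canon]. *)
Lemma rtens_rcomp {X Y Z X' Y' Z' : mob M} (B : wob M) (g : mhom Y (mtens Z (proj1_sig B)))
  (A : wob M) (f : mhom X (mtens Y (proj1_sig A)))
  (B' : wob M) (g' : mhom Y' (mtens Z' (proj1_sig B')))
  (A' : wob M) (f' : mhom X' (mtens Y' (proj1_sig A'))) :
  prel M (rtens M (rcomp M (rep B g) (rep A f)) (rcomp M (rep B' g') (rep A' f')))
         (rcomp M (rtens M (rep B g) (rep B' g')) (rtens M (rep A f) (rep A' f'))).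
Proof.
  apply (prel_intro (wtens M (wtens M B A) (wtens M B' A'))
    (wtens M (wtens M B B') (wtens M A A')) _ _
    (canon M (proj1_sig B) (proj1_sig A) (proj1_sig B') (proj1_sig A'))); [apply iso_canon|].
  simpl. rewrite !tens_comp, <- tens_id_comp. reassoc.
  rewrite <- (tens_id (proj1_sig A) (proj1_sig A')), <- canon_nat_k.
  rwk (canon_assoc_comp Z Z' (proj1_sig B) (proj1_sig B') (proj1_sig A) (proj1_sig A')).
  rewrite tens_id. reflexivity.
Qed.

Lemma P_assoc_nat {X Y Z X' Y' Z' : mob M}
  (A : wob M) (f : mhom X (mtens X' (proj1_sig A)))
  (B : wob M) (g : mhom Y (mtens Y' (proj1_sig B)))
  (C : wob M) (h : mhom Z (mtens Z' (proj1_sig C))) :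
  pcomp M (pi_m M (massoc X' Y' Z'))
    (ptensm M (ptensm M (pmk M (rep A f)) (pmk M (rep B g))) (pmk M (rep C h)))
  = pcomp M (ptensm M (pmk M (rep A f)) (ptensm M (pmk M (rep B g)) (pmk M (rep C h))))
      (pi_m M (massoc X Y Z)).
Proof.
  rewrite pi_m_rep, pi_m_rep, !ptensm_pmk, !pcomp_pmk. apply pmk_eq.
  eapply prel_trans; [apply rcomp_pi_l|]. eapply prel_trans; [|apply prel_sym, rcomp_pi_r].
  apply (prel_intro (wtens M (wtens M A B) C) (wtens M A (wtens M B C)) _ _
    (massoc (proj1_sig A) (proj1_sig B) (proj1_sig C))); [apply iso_assoc|].
  simpl. rwkr (tens_split_r (massoc X' Y' Z') (massoc (proj1_sig A) (proj1_sig B) (proj1_sig C))).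
  rewrite tens_comp_l_split. reassoc.
  rwk (canon_assoc X' (proj1_sig A) Y' (proj1_sig B) Z' (proj1_sig C)).
  rewrite assoc_nat. rewrite <- id_tens_comp_r. reassoc. reflexivity.
Qed.

Lemma P_lunit_nat {X Y : mob M} (A : wob M) (f : mhom X (mtens Y (proj1_sig A))) :
  pcomp M (pi_m M (mlunit Y)) (ptensm M (pid M munit) (pmk M (rep A f)))
  = pcomp M (pmk M (rep A f)) (pi_m M (mlunit X)).
Proof.
  rewrite pi_m_rep, pi_m_rep, pid_pmk, !ptensm_pmk, !pcomp_pmk. apply pmk_eq.
  eapply prel_trans; [apply rcomp_pi_l|]. eapply prel_trans; [|apply prel_sym, rcomp_pi_r].
  apply (prel_intro (wtens M (wunit M) A) A _ _ (mlunit _)); [apply iso_lunit|].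
  simpl. rewrite (tens_split_l (mrunit_inv munit) f). reassoc. rwk (canon_lunit Y (proj1_sig A)).
  apply lunit_nat.
Qed.

Lemma P_runit_nat {X Y : mob M} (A : wob M) (f : mhom X (mtens Y (proj1_sig A))) :
  pcomp M (pi_m M (mrunit Y)) (ptensm M (pmk M (rep A f)) (pid M munit))
  = pcomp M (pmk M (rep A f)) (pi_m M (mrunit X)).
Proof.
  rewrite pi_m_rep, pi_m_rep, pid_pmk, !ptensm_pmk, !pcomp_pmk. apply pmk_eq.
  eapply prel_trans; [apply rcomp_pi_l|]. eapply prel_trans; [|apply prel_sym, rcomp_pi_r].
  apply (prel_intro (wtens M A (wunit M)) A _ _ (mrunit _)); [apply iso_runit|].
  simpl. rewrite (tens_split_r f (mrunit_inv munit)). reassoc. rwk (canon_runit Y (proj1_sig A)).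
  apply runit_nat.
Qed.

Lemma P_sym_nat {X Y X' Y' : mob M} (A : wob M) (f : mhom X (mtens X' (proj1_sig A)))
  (B : wob M) (g : mhom Y (mtens Y' (proj1_sig B))) :
  pcomp M (pi_m M (msym X' Y')) (ptensm M (pmk M (rep A f)) (pmk M (rep B g)))
  = pcomp M (ptensm M (pmk M (rep B g)) (pmk M (rep A f))) (pi_m M (msym X Y)).
Proof.
  rewrite pi_m_rep, pi_m_rep, !ptensm_pmk, !pcomp_pmk. apply pmk_eq.
  eapply prel_trans; [apply rcomp_pi_l|]. eapply prel_trans; [|apply prel_sym, rcomp_pi_r].
  apply (prel_intro (wtens M A B) (wtens M B A) _ _ (msym (proj1_sig A) (proj1_sig B)));
    [apply iso_sym|].
  simpl. rwkr (tens_split_r (msym X' Y') (msym (proj1_sig A) (proj1_sig B))).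
  rwk (canon_sym X' (proj1_sig A) Y' (proj1_sig B)). rewrite sym_nat. reassoc. reflexivity.
Qed.

Lemma P_axioms : smc_axioms (P_data M).
Proof.
  constructor; cbn [mcomp mid mtensm mtens munit massoc massoc_inv mlunit mlunit_inv
     mrunit mrunit_inv msym P_data].
  - intros W X Y Z h g f.
    destruct (pmk_surj h) as [C [h' ->]], (pmk_surj g) as [B [g' ->]], (pmk_surj f) as [A [f' ->]].
    rewrite !pcomp_pmk. apply pmk_eq, rcomp_assoc.
  - intros X Y f. destruct (pmk_surj f) as [A [f' ->]].
    rewrite pid_pi_m, pi_m_rep, pcomp_pmk. apply pmk_eq. eapply prel_trans; [apply rcomp_pi_l|].
    rewrite tens_id, comp_id_l. apply prel_refl.
  - intros X Y f. destruct (pmk_surj f) as [A [f' ->]].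
    rewrite pid_pi_m, pi_m_rep, pcomp_pmk. apply pmk_eq. eapply prel_trans; [apply rcomp_pi_r|].
    rewrite comp_id_r. apply prel_refl.
  - intros X Y. rewrite !pid_pi_m, ptensm_pi_m, tens_id. reflexivity.
  - intros X X' X'' Y Y' Y'' f f' g g'.
    destruct (pmk_surj f) as [A [f0 ->]], (pmk_surj f') as [B [f1 ->]],
      (pmk_surj g) as [A' [g0 ->]], (pmk_surj g') as [B' [g1 ->]].
    rewrite !pcomp_pmk, !ptensm_pmk, pcomp_pmk. apply pmk_eq. apply rtens_rcomp.
  - intros X X' Y Y' Z Z' f g h.
    destruct (pmk_surj f) as [A [f0 ->]], (pmk_surj g) as [B [g0 ->]], (pmk_surj h) as [C [h0 ->]].
    apply P_assoc_nat.
  - intros X Y f. destruct (pmk_surj f) as [A [f0 ->]]. apply P_lunit_nat.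
  - intros X Y f. destruct (pmk_surj f) as [A [f0 ->]]. apply P_runit_nat.
  - intros X X' Y Y' f g. destruct (pmk_surj f) as [A [f0 ->]], (pmk_surj g) as [B [g0 ->]].
    apply P_sym_nat.
  - intros. rewrite pcomp_pi_m, assoc_inv_assoc, pid_pi_m. reflexivity.
  - intros. rewrite pcomp_pi_m, assoc_assoc_inv, pid_pi_m. reflexivity.
  - intros. rewrite pcomp_pi_m, lunit_inv_lunit, pid_pi_m. reflexivity.
  - intros. rewrite pcomp_pi_m, lunit_lunit_inv, pid_pi_m. reflexivity.
  - intros. rewrite pcomp_pi_m, runit_inv_runit, pid_pi_m. reflexivity.
  - intros. rewrite pcomp_pi_m, runit_runit_inv, pid_pi_m. reflexivity.
  - intros. rewrite pcomp_pi_m, sym_sym, pid_pi_m. reflexivity.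
  - intros. rewrite !pid_pi_m, !ptensm_pi_m, pcomp_pi_m, triangle. reflexivity.
  - intros. rewrite !pid_pi_m, !ptensm_pi_m, !pcomp_pi_m, pentagon. reflexivity.
  - intros. rewrite !pid_pi_m, !ptensm_pi_m, !pcomp_pi_m, hexagon. reflexivity.
Qed.

Lemma pmk_rep_factor {X Y : mob M} (A : wob M) (f : mhom X (mtens Y (proj1_sig A))) :
  pmk M (rep A f) = pcomp M (pcomp M (pi_m M (mrunit Y))
    (ptensm M (pid M Y) (pmk M (rep A (mlunit_inv (proj1_sig A)))))) (pi_m M f).
Proof.
  transitivity (pcomp M (pmk M (rep A (mid _))) (pi_m M f)).
  { rewrite pi_m_rep, pcomp_pmk. apply pmk_eq, prel_sym.
    eapply prel_trans; [apply rcomp_pi_r|]. rewrite comp_id_l. apply prel_refl. }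
  f_equal. rewrite pid_pmk, ptensm_pmk, pi_m_rep, pcomp_pmk. apply pmk_eq, prel_sym.
  eapply prel_trans; [apply rcomp_pi_l|].
  apply (prel_intro (wtens M (wunit M) A) A _ _ (mlunit _)); [apply iso_lunit|]. simpl.
  rewrite canon_unit_unit, comp_id_l, (comp_assoc (mid Y ⊗ mlunit _)), <- tens_split_r,
    <- tens_comp, runit_runit_inv, lunit_lunit_inv, tens_id.
  reflexivity.
Qed.

Definition P_SMC : SMC := {| smc := P_data M; smc_ax := P_axioms |}.

Lemma pi_functor_ssmf : is_ssmf M (P_data M) (pi_functor M).
Proof.
  constructor; cbn [fo fm fphi2 fphi0 pi_functor mcomp mid mtensm mtens munit massoc mlunit
    mrunit msym P_data]; intros; try apply (iso_id P_SMC);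
    rewrite ?pid_pi_m, ?ptensm_pi_m, ?pcomp_pi_m, ?tens_id, ?comp_id_l, ?comp_id_r; reflexivity.
Qed.

End PCategory.

Section PPure.
Context {M : SMC}.
Local Notation "1" := (mid _).

Lemma pcomp_rep_pid {X Y : mob M} (A B : wob M) (f : mhom X (mtens Y (proj1_sig A)))
  (g : mhom Y (mtens X (proj1_sig B))) :
  pcomp M (pmk M (rep B g)) (pmk M (rep A f)) = pid M X ->
  exists e : mhom (mtens (mtens X (proj1_sig B)) (proj1_sig A)) X,
    is_iso M e /\ e ∘ ((g ⊗ 1) ∘ f) = 1.
Proof.
  rewrite pcomp_pmk, pid_pmk. intros [al [Hal E]]%pmk_inj. simpl in Hal, E.
  exists (mrunit X ∘ ((mid X ⊗ al) ∘ massoc X (proj1_sig B) (proj1_sig A))). split.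
  - apply iso_comp; [apply iso_comp|apply iso_runit];
      [apply iso_assoc|apply iso_tensm; [apply iso_id|exact Hal]].
  - reassoc. etransitivity; [apply f_equal; exact E|apply runit_runit_inv].
Qed.

Lemma rep_iso_of_P_iso {X Y : mob M} (A : wob M) (f : mhom X (mtens Y (proj1_sig A))) :
  is_iso (P_data M) (pmk M (rep A f)) -> is_iso M f.
Proof.
  intros [S [H1 H2]]. destruct (pmk_surj S) as [B [g ->]].
  destruct (pcomp_rep_pid A B f g H1) as [e [He Ef]].
  destruct (pcomp_rep_pid B A g f H2) as [e' [_ Eg]].
  apply (iso_of_comp_iso f (g ⊗ 1) ((e' ∘ (f ⊗ 1)) ⊗ 1)).
  - rewrite tens_id_comp, <- comp_assoc, Eg, tens_id. reflexivity.
  - exact (iso_of_comp_id e _ He Ef).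
Qed.

Lemma P_right_inv_of_rep_iso {X Y : mob M} (A : wob M) (f : mhom X (mtens Y (proj1_sig A))) :
  is_iso M f -> exists (B : wob M) (g : mhom Y (mtens X (proj1_sig B))),
    is_iso M g /\ pcomp M (pmk M (rep A f)) (pmk M (rep B g)) = pid M Y.
Proof.
  intros [fi [Hf1 Hf2]]. destruct A as [A HA]. simpl in f, fi, Hf1, Hf2.
  pose proof HA as [As [[e [ei [He1 He2]]] [e' He']]].
  assert (HAs : weakly_invertible M As).
  { exists A; split; [exists e'; exact He' | exists e, ei; split; assumption]. }
  exists (exist _ As HAs),
    ((fi ⊗ mid As) ∘ (massoc_inv Y A As ∘ ((mid Y ⊗ ei) ∘ mrunit_inv Y))).
  split.
  - apply iso_comp; [|apply iso_tensm; [exists f; split; assumption|apply iso_id]].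
    apply iso_comp; [|apply iso_assoc_inv].
    apply iso_comp; [apply iso_runit_inv|].
    apply iso_tensm; [apply iso_id|exists e; split; assumption].
  - rewrite pcomp_pmk, pid_pmk. apply pmk_eq.
    apply (prel_intro (wtens M (exist _ A HA) (exist _ As HAs)) (wunit M) _ _ e).
    { exists ei; split; assumption. }
    simpl. reassoc. rewrite (cancel_k (whisker_r_inv Hf2)). cancel_inverses.
    rewrite (cancel_k (whisker_l_inv He2)). reflexivity.
Qed.

(* [B, g] is a right inverse of [A, f] and has a right inverse itself, hence is an
   inverse. *)
Lemma P_iso_of_rep_iso {X Y : mob M} (A : wob M) (f : mhom X (mtens Y (proj1_sig A))) :
  is_iso M f -> is_iso (P_data M) (pmk M (rep A f)).
Proof.
  intros Hf. destruct (P_right_inv_of_rep_iso A f Hf) as [B [g [Hg Eg]]].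
  destruct (P_right_inv_of_rep_iso B g Hg) as [C [h [_ Eh]]].
  exists (pmk M (rep B g)). split; [|exact Eg].
  rewrite (right_inv_unique (M := P_SMC) _ _ _ Eg Eh). exact Eh.
Qed.

Lemma wi_of_P_wi (X : mob M) : weakly_invertible (P_data M) X -> weakly_invertible M X.
Proof.
  intros [X' [[S HS] _]]. change (phom M (mtens X X') munit) in S.
  destruct (pmk_surj S) as [[A HA] [f ->]]. apply rep_iso_of_P_iso in HS. simpl in f, HS.
  destruct HA as [As [HAs _]].
  apply (wi_of_tens_unit X (mtens X' As)).
  eapply isomorphic_trans. { exists (massoc_inv X X' As). apply iso_assoc_inv. }
  eapply isomorphic_trans. { apply isomorphic_tens; [exists f; exact HS|apply isomorphic_refl]. }
  eapply isomorphic_trans.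
  { apply isomorphic_tens; [exists (mlunit A); apply iso_lunit|apply isomorphic_refl]. }
  exact HAs.
Qed.

Lemma P_iso_exists (X Y : mob M) : weakly_invertible M X -> weakly_invertible M Y ->
  exists S : phom M X Y, is_iso (P_data M) S.
Proof.
  intros HX HY. pose proof HY as [Ys [[eY [eYi [HY1 HY2]]] HY3]].
  assert (HYs : weakly_invertible M Ys).
  { exists Y. split; [exact HY3|exists eY; exists eYi; split; assumption]. }
  exists (pmk M (rep (exist _ (mtens Ys X) (wi_tens M Ys X HYs HX))
     (massoc Y Ys X ∘ ((eYi ⊗ mid X) ∘ mlunit_inv X)))).
  apply P_iso_of_rep_iso. simpl.
  apply iso_comp; [apply iso_comp; [apply iso_lunit_inv|]|apply iso_assoc].
  apply iso_tensm; [exists eY; split; assumption|apply iso_id].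
Qed.

Lemma P_pure : purely_monoidal (P_data M).
Proof.
  intros X Y HX HY. apply wi_of_P_wi in HX. apply wi_of_P_wi in HY.
  destruct (P_iso_exists X Y HX HY) as [S HS]. exists S. split; [exact HS|].
  intros T HT. change (phom M X Y) in S, T.
  destruct (pmk_surj S) as [A [f ->]]. destruct (pmk_surj T) as [A' [f' ->]].
  apply rep_iso_of_P_iso in HS. apply rep_iso_of_P_iso in HT.
  destruct HS as [fi [Hf1 Hf2]].
  destruct (whisker_l_full Y HY (f' ∘ fi)) as [al [Hal Hali]].
  apply pmk_eq. apply prel_sym. apply (prel_intro A A' _ _ al).
  - apply Hali. apply iso_comp; [exists f; split; assumption|exact HT].
  - rewrite Hal, <- comp_assoc, Hf1, comp_id_r. reflexivity.
Qed.

End PPure.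

Lemma fdata_eta {A B : smc_data} (G : fdata A B) :
  G = @Build_fdata A B (fo G) (@fm _ _ G) (fphi2 G) (fphi0 G).
Proof. destruct G; reflexivity. Qed.

Lemma fdata_ext {A B : smc_data} (fo0 : mob A -> mob B)
  (fm1 fm2 : forall X Y : mob A, mhom X Y -> mhom (fo0 X) (fo0 Y))
  (p1 p2 : forall X Y : mob A, mhom (mtens (fo0 X) (fo0 Y)) (fo0 (mtens X Y)))
  (q1 q2 : mhom munit (fo0 munit)) :
  fm1 = fm2 -> p1 = p2 -> q1 = q2 ->
  @Build_fdata A B fo0 fm1 p1 q1 = @Build_fdata A B fo0 fm2 p2 q2.
Proof. intros; subst; reflexivity. Qed.

Lemma pure_iso_unique {N : smc_data} (HN : purely_monoidal N) {P Q : mob N}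
  (HP : weakly_invertible N P) (HQ : weakly_invertible N Q) (g1 g2 : mhom P Q) :
  is_iso N g1 -> is_iso N g2 -> g1 = g2.
Proof.
  intros H1 H2. destruct (HN P Q HP HQ) as [f [_ Hf]]. rewrite (Hf g1 H1), (Hf g2 H2). reflexivity.
Qed.

Section Lift.
Context {M N : SMC} (F : fdata M N) (HF : is_ssmf M N F).
Local Notation φ := (fphi2 F).

Definition fphi2_inv (X Y : mob M) : mhom (fo F (mtens X Y)) (mtens (fo F X) (fo F Y)) :=
  inv_of (f_phi2_iso _ _ _ HF X Y).
Lemma fphi2_inv_l (X Y : mob M) : fphi2_inv X Y ∘ φ X Y = mid _.
Proof. apply inv_of_l. Qed.
Lemma fphi2_inv_r (X Y : mob M) : φ X Y ∘ fphi2_inv X Y = mid _.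
Proof. apply inv_of_r. Qed.
Lemma fphi2_inv_l_k {V : mob N} {X Y : mob M} (k : mhom V _) : fphi2_inv X Y ∘ (φ X Y ∘ k) = k.
Proof. rewrite comp_assoc, fphi2_inv_l, comp_id_l. reflexivity. Qed.
Lemma fphi2_inv_r_k {V : mob N} {X Y : mob M} (k : mhom V _) : φ X Y ∘ (fphi2_inv X Y ∘ k) = k.
Proof. rewrite comp_assoc, fphi2_inv_r, comp_id_l. reflexivity. Qed.
Lemma fphi2_iso (X Y : mob M) : is_iso N (φ X Y).
Proof. exists (fphi2_inv X Y). split; [apply fphi2_inv_l|apply fphi2_inv_r]. Qed.
Local Notation φi := fphi2_inv.

Lemma fm_comp {X Y Z : mob M} (g : mhom Y Z) (f : mhom X Y) : fm F (g ∘ f) = fm F g ∘ fm F f.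
Proof. apply (f_comp _ _ _ HF). Qed.
Lemma fm_id (X : mob M) : fm F (mid X) = mid _.
Proof. apply (f_id _ _ _ HF). Qed.
Lemma fphi2_nat {X X' Y Y' : mob M} (f : mhom X X') (g : mhom Y Y') :
  fm F (f ⊗ g) ∘ φ X Y = φ X' Y' ∘ (fm F f ⊗ fm F g).
Proof. apply (f_phi2_nat _ _ _ HF). Qed.
Lemma fphi2_inv_nat {X X' Y Y' : mob M} (f : mhom X X') (g : mhom Y Y') :
  fphi2_inv X' Y' ∘ fm F (f ⊗ g) = (fm F f ⊗ fm F g) ∘ fphi2_inv X Y.
Proof.
  apply (iso_cancel_r (φ X Y)); [apply fphi2_iso|].
  reassoc. rewrite fphi2_nat, fphi2_inv_l_k, fphi2_inv_l, comp_id_r. reflexivity.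
Qed.
Lemma fphi2_assoc (X Y Z : mob M) :
  fm F (massoc X Y Z) ∘ (φ (mtens X Y) Z ∘ (φ X Y ⊗ mid (fo F Z)))
  = φ X (mtens Y Z) ∘ ((mid (fo F X) ⊗ φ Y Z) ∘ massoc (fo F X) (fo F Y) (fo F Z)).
Proof. apply (f_assoc _ _ _ HF). Qed.
Lemma fphi2_sym (X Y : mob M) : fm F (msym X Y) ∘ φ X Y = φ Y X ∘ msym (fo F X) (fo F Y).
Proof. apply (f_sym _ _ _ HF). Qed.

Lemma fm_iso {X Y : mob M} (f : mhom X Y) : is_iso M f -> is_iso N (fm F f).
Proof.
  intros [g [H1 H2]]. exists (fm F g). rewrite <- !fm_comp, H1, H2, !fm_id. split; reflexivity.
Qed.

Lemma fphi2_assoc_inv (X Y Z : mob M) :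
  fm F (massoc_inv X Y Z) ∘ (φ X (mtens Y Z) ∘ (mid (fo F X) ⊗ φ Y Z))
  = φ (mtens X Y) Z ∘ ((φ X Y ⊗ mid (fo F Z)) ∘ massoc_inv (fo F X) (fo F Y) (fo F Z)).
Proof.
  apply (iso_cancel_l (fm F (massoc X Y Z))). { apply fm_iso, iso_assoc. }
  reassoc.
  rewrite (comp_assoc (fm F (massoc X Y Z)) (fm F (massoc_inv X Y Z))), <- fm_comp, assoc_assoc_inv,
    fm_id, comp_id_l.
  rwk (fphi2_assoc X Y Z). cancel_inverses. reflexivity.
Qed.

Lemma fphi2_nat_whisker {W U V : mob M} (h : mhom U V) :
  fm F (mid W ⊗ h) ∘ φ W U = φ W V ∘ (mid _ ⊗ fm F h).
Proof. rewrite fphi2_nat, fm_id. reflexivity. Qed.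

Lemma fphi2_canon (W X Y Z : mob M) :
  fm F (canon M W X Y Z) ∘ (φ (mtens W X) (mtens Y Z) ∘ (φ W X ⊗ φ Y Z))
  = φ (mtens W Y) (mtens X Z)
    ∘ ((φ W Y ⊗ φ X Z) ∘ canon N (fo F W) (fo F X) (fo F Y) (fo F Z)).
Proof.
  unfold canon at 1. rewrite !fm_comp. reassoc.
  rewrite (tens_split_l (φ W X) (φ Y Z)). rwk (fphi2_assoc W X (mtens Y Z)).
  rewrite <- (tens_id (fo F W) (fo F X)), assoc_nat.
  rwk (fphi2_nat_whisker (W:=W) (massoc_inv X Y Z)). rewrite !id_tens_comp_k. reassoc.
  rewrite fphi2_assoc_inv. rewrite <- !id_tens_comp. reassoc.
  rwk (fphi2_nat_whisker (W:=W) (msym X Y ⊗ mid Z)). rewrite !id_tens_comp_k. reassoc.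
  rwk (fphi2_nat (msym X Y) (mid Z)).
  rewrite fm_id, tens_id_comp_k, fphi2_sym, <- tens_id_comp. rewrite <- !id_tens_comp. reassoc.
  rwk (fphi2_nat_whisker (W:=W) (massoc Y X Z)). rewrite !id_tens_comp_k. reassoc.
  rwk (fphi2_assoc Y X Z). rewrite <- !id_tens_comp. reassoc.
  rwk (fphi2_assoc_inv W Y (mtens X Z)). rewrite assoc_inv_nat_k. rewrite tens_id.
  rwkr (tens_split_l (φ W Y) (φ X Z)).
  unfold canon. reassoc. reflexivity.
Qed.

Definition fphi0_inv : mhom (fo F munit) munit := inv_of (f_phi0_iso _ _ _ HF).
Lemma fphi0_inv_r : fphi0 F ∘ fphi0_inv = mid _.
Proof. apply inv_of_r. Qed.
Lemma fphi0_inv_iso : is_iso N fphi0_inv.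
Proof. apply iso_inv_of. Qed.

Lemma fo_wi (A : mob M) : weakly_invertible M A -> weakly_invertible N (fo F A).
Proof.
  intros [B [[e1 He1] [e2 He2]]]. exists (fo F B). split.
  - exists (fphi0_inv ∘ (fm F e1 ∘ φ A B)).
    apply iso_comp; [apply iso_comp; [apply fphi2_iso|apply fm_iso; auto]|apply fphi0_inv_iso].
  - exists (fphi0_inv ∘ (fm F e2 ∘ φ B A)).
    apply iso_comp; [apply iso_comp; [apply fphi2_iso|apply fm_iso; auto]|apply fphi0_inv_iso].
Qed.

Lemma fphi2_inv_nat_k {V : mob N} {X X' Y Y' : mob M} (f : mhom X X') (g : mhom Y Y')
  (k : mhom V _) :
  φi X' Y' ∘ (fm F (f ⊗ g) ∘ k) = (fm F f ⊗ fm F g) ∘ (φi X Y ∘ k).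
Proof. rewrite !comp_assoc, fphi2_inv_nat. reflexivity. Qed.

Lemma fphi2_inv_assoc (Z B A : mob M) :
  φi Z (mtens B A) ∘ fm F (massoc Z B A)
  = (mid _ ⊗ φ B A) ∘ (massoc _ _ _ ∘ ((φi Z B ⊗ mid _) ∘ φi (mtens Z B) A)).
Proof.
  apply (iso_cancel_l (φ Z (mtens B A))); [apply fphi2_iso|].
  rewrite fphi2_inv_r_k. rwkr (fphi2_assoc Z B A). reassoc.
  rewrite tens_id_comp_k, fphi2_inv_r, tens_id, comp_id_l, fphi2_inv_r, comp_id_r. reflexivity.
Qed.

Lemma fphi2_canon_inv (W X Y Z : mob M) :
  fm F (canon M W X Y Z) ∘ φ (mtens W X) (mtens Y Z)
  = φ (mtens W Y) (mtens X Z)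
    ∘ ((φ W Y ⊗ φ X Z)
    ∘ (canon N (fo F W) (fo F X) (fo F Y) (fo F Z) ∘ (φi W X ⊗ φi Y Z))).
Proof.
  apply (iso_cancel_r (φ W X ⊗ φ Y Z)); [apply iso_tensm; apply fphi2_iso|].
  reassoc. rewrite <- tens_comp, !fphi2_inv_l, tens_id, comp_id_r. apply fphi2_canon.
Qed.
Lemma fphi2_canon_inv_k {V : mob N} (W X Y Z : mob M) (k : mhom V _) :
  fm F (canon M W X Y Z) ∘ (φ (mtens W X) (mtens Y Z) ∘ k)
  = φ (mtens W Y) (mtens X Z)
    ∘ ((φ W Y ⊗ φ X Z) ∘ (canon N (fo F W) (fo F X) (fo F Y) (fo F Z)
    ∘ ((φi W X ⊗ φi Y Z) ∘ k))).
Proof. rewrite comp_assoc, fphi2_canon_inv. reassoc. reflexivity. Qed.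

Hypothesis HN : purely_monoidal N.

Definition unit_iso (A : wob M) : mhom (fo F (proj1_sig A)) munit :=
  proj1_sig (constructive_indefinite_description _ (HN _ _ (fo_wi _ (proj2_sig A)) (wi_unit N))).
Lemma unit_iso_is_iso (A : wob M) : is_iso N (unit_iso A).
Proof.
  unfold unit_iso. destruct (constructive_indefinite_description _ _) as [g [Hg Hu]]. exact Hg.
Qed.

Lemma unit_iso_unique (A : wob M) (g : mhom (fo F (proj1_sig A)) munit) :
  is_iso N g -> g = unit_iso A.
Proof.
  intros Hg. apply (pure_iso_unique HN); [apply fo_wi, (proj2_sig A)|apply wi_unit|exact Hg|].
  apply unit_iso_is_iso.
Qed.

Definition lift_rep {X Y : mob M} (r : prep M X Y) : mhom (fo F X) (fo F Y) :=
  mrunit (fo F Y)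
  ∘ ((mid _ ⊗ unit_iso (projT1 r)) ∘ (φi Y (proj1_sig (projT1 r)) ∘ fm F (projT2 r))).

Lemma lift_rep_prel {X Y : mob M} (r s : prep M X Y) : prel M r s -> lift_rep r = lift_rep s.
Proof.
  destruct r as [A f], s as [A' f']. intros [al [Hal E]]. simpl in *. subst f'.
  unfold lift_rep. simpl.
  rewrite fm_comp, (comp_assoc (φi Y (proj1_sig A'))), fphi2_inv_nat, fm_id. reassoc.
  rewrite id_tens_comp_k, (unit_iso_unique A (unit_iso A' ∘ fm F al)); [reflexivity|].
  apply iso_comp; [apply fm_iso, Hal|apply unit_iso_is_iso].
Qed.

Lemma lift_rep_pi {X Y : mob M} (h : mhom X Y) : lift_rep (rep_pi h) = fm F h.
Proof.
  unfold lift_rep, rep_pi. simpl.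
  rewrite <- (unit_iso_unique (wunit M) fphi0_inv fphi0_inv_iso).
  assert (E : mrunit (fo F Y) ∘ (mid _ ⊗ fphi0_inv) = fm F (mrunit Y) ∘ φ Y munit).
  { rewrite <- (f_runit _ _ _ HF Y). reassoc.
    rewrite id_tens_comp, fphi0_inv_r, tens_id, comp_id_r. reflexivity. }
  rewrite comp_assoc, E. reassoc. rewrite fphi2_inv_r_k, fm_comp.
  rewrite (comp_assoc (fm F (mrunit Y))), <- fm_comp, runit_runit_inv, fm_id, comp_id_l.
  reflexivity.
Qed.

Lemma unit_iso_tens (B A : wob M) :
  unit_iso (wtens M B A) ∘ φ (proj1_sig B) (proj1_sig A)
  = mlunit munit ∘ (unit_iso B ⊗ unit_iso A).
Proof.
  apply (pure_iso_unique HN).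
  - apply wi_tens; apply fo_wi; apply proj2_sig.
  - apply wi_unit.
  - apply iso_comp; [apply fphi2_iso|apply unit_iso_is_iso].
  - apply iso_comp; [apply iso_tensm; apply unit_iso_is_iso|apply iso_lunit].
Qed.

Lemma lift_rep_rcomp {X Y Z : mob M} (B : wob M) (g : mhom Y (mtens Z (proj1_sig B)))
  (A : wob M) (f : mhom X (mtens Y (proj1_sig A))) :
  lift_rep (rcomp M (rep B g) (rep A f)) = lift_rep (rep B g) ∘ lift_rep (rep A f).
Proof.
  unfold lift_rep. simpl. rewrite !fm_comp. reassoc.
  rewrite (comp_assoc (φi Z _)), fphi2_inv_assoc.
  reassoc.
  rewrite fphi2_inv_nat_k, fm_id. rewrite id_tens_comp_k, unit_iso_tens, <- id_tens_comp. reassoc.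
  rewrite <- assoc_nat_k. rwk (triangle (fo F Z) munit).
  rewrite (tens_split_l (mid (fo F Z) ⊗ unit_iso B) (unit_iso A)). reassoc.
  rewrite <- !whisker_exchange_k. rewrite !runit_nat_k. reflexivity.
Qed.

Lemma lift_rep_rtens {X Y X' Y' : mob M} (A : wob M) (f : mhom X (mtens Y (proj1_sig A)))
  (B : wob M) (g : mhom X' (mtens Y' (proj1_sig B))) :
  lift_rep (rtens M (rep A f) (rep B g)) ∘ φ X X'
  = φ Y Y' ∘ (lift_rep (rep A f) ⊗ lift_rep (rep B g)).
Proof.
  unfold lift_rep. simpl. rewrite !tens_comp. rewrite fm_comp. reassoc. rewrite fphi2_nat.
  rewrite fphi2_canon_inv_k. rewrite fphi2_inv_l_k.
  rewrite id_tens_comp_r_k, unit_iso_tens, (tens_split_l (φ Y Y')), <- id_tens_comp. reassoc.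
  rewrite runit_nat_k. rewrite <- (tens_id (fo F Y) (fo F Y')), <- canon_nat_k.
  rewrite tens_id. rwk (runit_tens_canon (fo F Y) (fo F Y')). reflexivity.
Qed.

Definition P_lift : fdata (P_data M) N :=
  @Build_fdata (P_data M) N (fo F) (fun X Y S => lift_rep (prep_of M S)) (fphi2 F) (fphi0 F).

Lemma P_lift_pmk {X Y : mob M} (r : prep M X Y) : lift_rep (prep_of M (pmk M r)) = lift_rep r.
Proof. symmetry. apply lift_rep_prel, prep_of_pmk. Qed.

Lemma P_lift_ssmf : is_ssmf (P_data M) N P_lift.
Proof.
  constructor;
    cbn [fo fm fphi2 fphi0 P_lift mcomp mid mtensm mtens munit massoc mlunit mrunit msym P_data].
  - intros X Y Z g f. destruct (pmk_surj g) as [B [g' ->]], (pmk_surj f) as [A [f' ->]].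
    rewrite pcomp_pmk, !P_lift_pmk. apply lift_rep_rcomp.
  - intros X. rewrite pid_pi_m, pi_m_rep, P_lift_pmk, lift_rep_pi, fm_id. reflexivity.
  - intros X X' Y Y' f g. destruct (pmk_surj f) as [A [f' ->]], (pmk_surj g) as [B [g' ->]].
    rewrite ptensm_pmk, !P_lift_pmk. apply lift_rep_rtens.
  - apply (f_phi2_iso _ _ _ HF).
  - apply (f_phi0_iso _ _ _ HF).
  - intros. rewrite pi_m_rep, P_lift_pmk, lift_rep_pi. apply (f_assoc _ _ _ HF).
  - intros. rewrite pi_m_rep, P_lift_pmk, lift_rep_pi. apply (f_lunit _ _ _ HF).
  - intros. rewrite pi_m_rep, P_lift_pmk, lift_rep_pi. apply (f_runit _ _ _ HF).
  - intros. rewrite pi_m_rep, P_lift_pmk, lift_rep_pi. apply (f_sym _ _ _ HF).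
Qed.

Lemma P_lift_pi : fcomp P_lift (pi_functor M) = F.
Proof.
  rewrite (fdata_eta F). unfold fcomp. cbn [fo fm fphi2 fphi0 P_lift pi_functor].
  apply fdata_ext.
  - apply functional_extensionality_dep; intros X. apply functional_extensionality_dep; intros Y.
    apply functional_extensionality; intros f. rewrite pi_m_rep, P_lift_pmk, lift_rep_pi.
    reflexivity.
  - apply functional_extensionality_dep; intros X. apply functional_extensionality_dep; intros Y.
    rewrite pid_pi_m, pi_m_rep, P_lift_pmk, lift_rep_pi, fm_id, comp_id_l. reflexivity.
  - rewrite pid_pi_m, pi_m_rep, P_lift_pmk, lift_rep_pi, fm_id, comp_id_l. reflexivity.
Qed.

End Lift.

Section LiftUnique.
Context {M N : SMC} (HN : purely_monoidal N) (G : fdata (P_data M) N)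
  (HG : is_ssmf (P_data M) N G) (HGpi : is_ssmf M N (fcomp G (pi_functor M))).
Local Notation F := (fcomp G (pi_functor M)).

Let G_id (X : mob M) : fm G (pid M X) = mid (fo G X) := f_id _ _ _ HG X.
Let G_comp {X Y Z : mob M} (g : phom M Y Z) (h : phom M X Y) :
  fm G (pcomp M g h) = fm G g ∘ fm G h := f_comp _ _ _ HG X Y Z g h.
Let G_phi2_nat {X X' Y Y' : mob M} (x : phom M X X') (y : phom M Y Y') :
  fm G (ptensm M x y) ∘ fphi2 G X Y = fphi2 G X' Y' ∘ (fm G x ⊗ fm G y)
  := f_phi2_nat _ _ _ HG X X' Y Y' x y.

Lemma fm_rep_lunit_inv (A : wob M) :
  fm G (pmk M (rep A (mlunit_inv (proj1_sig A)))) = fphi0 G ∘ unit_iso F HGpi HN A.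
Proof.
  apply (pure_iso_unique HN).
  - apply (fo_wi F HGpi), (proj2_sig A).
  - apply (fo_wi F HGpi), wi_unit.
  - apply (fm_iso (M := P_SMC) G HG), P_iso_of_rep_iso, iso_lunit_inv.
  - apply iso_comp; [apply unit_iso_is_iso|apply (f_phi0_iso _ _ _ HG)].
Qed.

Lemma fm_pmk_rep {X Y : mob M} (A : wob M) (f : mhom X (mtens Y (proj1_sig A))) :
  fm G (pmk M (rep A f)) = lift_rep F HGpi HN (rep A f).
Proof.
  rewrite pmk_rep_factor, !G_comp. unfold lift_rep. cbn [projT1 projT2 rep].
  change (fm F f) with (fm G (pi_m M f)).
  rewrite !comp_assoc. f_equal. rewrite <- !comp_assoc.
  apply (iso_cancel_r (fphi2 F Y (proj1_sig A))); [apply (fphi2_iso F HGpi)|].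
  reassoc. rewrite (fphi2_inv_l F HGpi), comp_id_r.
  change (fphi2 F Y (proj1_sig A))
    with (fm G (pid M (mtens Y (proj1_sig A))) ∘ fphi2 G Y (proj1_sig A)).
  rewrite G_id, comp_id_l.
  transitivity (fm G (pi_m M (mrunit Y)) ∘ (fphi2 G Y munit
    ∘ (fm G (pid M Y) ⊗ fm G (pmk M (rep A (mlunit_inv (proj1_sig A))))))).
  { f_equal. apply G_phi2_nat. }
  rewrite G_id, fm_rep_lunit_inv, <- id_tens_comp. reassoc.
  pose proof (f_runit _ _ _ HGpi Y) as Hr. cbn [fo fm fphi2 fphi0 fcomp pi_functor] in Hr.
  rewrite !G_id, !comp_id_l in Hr. rwk Hr. reflexivity.
Qed.

Lemma P_lift_unique : P_lift F HGpi HN = G.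
Proof.
  rewrite (fdata_eta G) at 2. unfold P_lift. cbn [fo fm fphi2 fphi0 fcomp pi_functor].
  apply fdata_ext.
  - apply functional_extensionality_dep; intros X.
    apply functional_extensionality_dep; intros Y.
    apply functional_extensionality; intros S.
    destruct (pmk_surj S) as [A [f ->]]. rewrite P_lift_pmk. symmetry. apply fm_pmk_rep.
  - apply functional_extensionality_dep; intros X.
    apply functional_extensionality_dep; intros Y.
    rewrite G_id, comp_id_l. reflexivity.
  - rewrite G_id, comp_id_l. reflexivity.
Qed.

End LiftUnique.

Section Picard.
Context {M : SMC}.

Lemma pic_hom_eq {A B : pic_ob M} (f g : pic_hom M A B) : proj1_sig f = proj1_sig g -> f = g.
Proof. destruct f as [f Hf], g as [g Hg]. simpl. intros ->. f_equal. apply proof_irrelevance. Qed.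

Lemma Pic_axioms : smc_axioms (Pic_data M).
Proof.
  constructor; intros; apply pic_hom_eq; cbn.
  - apply comp_assoc.
  - apply comp_id_l.
  - apply comp_id_r.
  - apply tens_id.
  - apply tens_comp.
  - apply assoc_nat.
  - apply lunit_nat.
  - apply runit_nat.
  - apply sym_nat.
  - apply assoc_inv_assoc.
  - apply assoc_assoc_inv.
  - apply lunit_inv_lunit.
  - apply lunit_lunit_inv.
  - apply runit_inv_runit.
  - apply runit_runit_inv.
  - apply sym_sym.
  - apply triangle.
  - apply pentagon.
  - apply hexagon.
Qed.

Lemma Pic_groupoid : is_groupoid (Pic_data M).
Proof.
  intros A B [f Hf]. pose proof Hf as [g [H1 H2]].
  assert (Hg : is_iso M g) by (exists f; split; assumption).
  exists (exist _ g Hg). split; apply pic_hom_eq; cbn; assumption.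
Qed.

Lemma Pic_wi (X : pic_ob M) : weakly_invertible (Pic_data M) X.
Proof.
  destruct X as [A HA]. pose proof HA as [B [[e1 He1] [e2 He2]]].
  assert (HB : weakly_invertible M B) by (exists A; split; [exists e2 | exists e1]; assumption).
  exists (exist _ B HB). split.
  - exists (exist _ e1 He1). apply Pic_groupoid.
  - exists (exist _ e2 He2). apply Pic_groupoid.
Qed.

Lemma Pic_2group : is_sym_2group (Pic_data M).
Proof. split; [apply Pic_axioms|split; [apply Pic_groupoid|apply Pic_wi]]. Qed.

Lemma pic_incl_ssmf : is_ssmf (Pic_data M) M (pic_incl M).
Proof.
  constructor; intros; cbn.
  - reflexivity.
  - reflexivity.
  - rewrite comp_id_l, comp_id_r. reflexivity.
  - apply iso_id.
  - apply iso_id.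
  - rewrite !tens_id, !comp_id_l, !comp_id_r. reflexivity.
  - rewrite tens_id, !comp_id_r. reflexivity.
  - rewrite tens_id, !comp_id_r. reflexivity.
  - rewrite comp_id_l, comp_id_r. reflexivity.
Qed.

End Picard.

Section PicLift.
Context {M G : SMC} (HG : is_sym_2group G) (F : fdata G M) (HF : is_ssmf G M F).

Definition Pic_lift : fdata G (Pic_data M) :=
  @Build_fdata G (Pic_data M)
    (fun X => exist _ (fo F X) (fo_wi F HF X (proj2 (proj2 HG) X)))
    (fun X Y f => exist _ (fm F f) (fm_iso F HF f (proj1 (proj2 HG) X Y f)))
    (fun X Y => exist _ (fphi2 F X Y) (f_phi2_iso _ _ _ HF X Y))
    (exist _ (fphi0 F) (f_phi0_iso _ _ _ HF)).

Lemma Pic_lift_ssmf : is_ssmf G (Pic_data M) Pic_lift.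
Proof.
  constructor; intros; try apply Pic_groupoid; apply pic_hom_eq; cbn.
  - apply (f_comp _ _ _ HF).
  - apply (f_id _ _ _ HF).
  - apply (f_phi2_nat _ _ _ HF).
  - apply (f_assoc _ _ _ HF).
  - apply (f_lunit _ _ _ HF).
  - apply (f_runit _ _ _ HF).
  - apply (f_sym _ _ _ HF).
Qed.

Lemma Pic_lift_incl : fcomp (pic_incl M) Pic_lift = F.
Proof.
  rewrite (fdata_eta F). unfold fcomp. cbn [fo fm fphi2 fphi0 Pic_lift pic_incl].
  apply fdata_ext.
  - reflexivity.
  - apply functional_extensionality_dep; intros X. apply functional_extensionality_dep; intros Y.
    apply comp_id_r.
  - apply comp_id_r.
Qed.

End PicLift.

Section PicLiftUnique.
Context {M G : SMC} (HG : is_sym_2group G).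

Lemma Pic_fdata_ext (a : mob G -> mob M) (w1 w2 : forall X, weakly_invertible M (a X))
  (fm1 fm2 : forall X Y : mob G, mhom X Y -> {g : mhom (a X) (a Y) | is_iso M g})
  (p1 p2 : forall X Y : mob G, {g : mhom (mtens (a X) (a Y)) (a (mtens X Y)) | is_iso M g})
  (q1 q2 : {g : mhom munit (a munit) | is_iso M g}) :
  (forall X Y f, proj1_sig (fm1 X Y f) = proj1_sig (fm2 X Y f)) ->
  (forall X Y, proj1_sig (p1 X Y) = proj1_sig (p2 X Y)) ->
  proj1_sig q1 = proj1_sig q2 ->
  @Build_fdata G (Pic_data M) (fun X => exist _ (a X) (w1 X)) fm1 p1 q1
  = @Build_fdata G (Pic_data M) (fun X => exist _ (a X) (w2 X)) fm2 p2 q2.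
Proof.
  intros E1 E2 E3.
  assert (Ew : w1 = w2) by (apply functional_extensionality_dep; intros; apply proof_irrelevance).
  subst w2.
  assert (Efm : fm1 = fm2).
  { apply functional_extensionality_dep; intros X. apply functional_extensionality_dep; intros Y.
    apply functional_extensionality; intros f. specialize (E1 X Y f).
    destruct (fm1 X Y f), (fm2 X Y f). simpl in E1. subst. f_equal. apply proof_irrelevance. }
  assert (Ep : p1 = p2).
  { apply functional_extensionality_dep; intros X. apply functional_extensionality_dep; intros Y.
    specialize (E2 X Y). destruct (p1 X Y), (p2 X Y). simpl in E2. subst. f_equal.
    apply proof_irrelevance. }
  assert (Eq : q1 = q2).
  { destruct q1, q2. simpl in E3. subst. f_equal. apply proof_irrelevance. }
  subst. reflexivity.
Qed.

Lemma sig_fun_ind (Q : (mob G -> pic_ob M) -> Prop) :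
  (forall a w, Q (fun X => exist _ (a X) (w X))) -> forall h, Q h.
Proof.
  intros H h. replace h with (fun X => exist _ (proj1_sig (h X)) (proj2_sig (h X))).
  - apply H.
  - apply functional_extensionality; intros X. destruct (h X); reflexivity.
Qed.

Lemma Pic_lift_unique (F2 : fdata G (Pic_data M)) (HF : is_ssmf G M (fcomp (pic_incl M) F2)) :
  Pic_lift HG (fcomp (pic_incl M) F2) HF = F2.
Proof.
  destruct F2 as [fo2 fm2 p2 p0]. revert fm2 p2 p0 HF. pattern fo2. revert fo2.
  apply sig_fun_ind. intros a w fm2 p2 p0 HF. unfold Pic_lift.
  cbn [fo fm fphi2 fphi0 fcomp pic_incl].
  apply Pic_fdata_ext.
  - intros. reflexivity.
  - intros. apply comp_id_r.
  - apply comp_id_r.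
Qed.

End PicLiftUnique.

Theorem corollary6p3 :
  (* SGr is coreflective in SMC, with right adjoint M |-> Pic(M)
     (counit: the inclusion Pic(M) -> M) *)
  (forall M : SMC,
     is_sym_2group (Pic_data M) /\
     is_ssmf (Pic_data M) M (pic_incl M) /\
     forall G : SMC, is_sym_2group G ->
       forall F : fdata G M, is_ssmf G M F ->
         exists! F' : fdata G (Pic_data M),
           is_ssmf G (Pic_data M) F' /\ fcomp (pic_incl M) F' = F)
  /\
  (* SPu is reflective in SMC, with left adjoint M |-> P(M)
     (unit: π_M : M -> P(M)) *)
  (forall M : SMC,
     smc_axioms (P_data M) /\ purely_monoidal (P_data M) /\
     is_ssmf M (P_data M) (pi_functor M) /\
     forall N : SMC, purely_monoidal N ->
       forall F : fdata M N, is_ssmf M N F ->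
         exists! F' : fdata (P_data M) N,
           is_ssmf (P_data M) N F' /\ fcomp F' (pi_functor M) = F).
Proof.
  split.
  - intros M. split; [apply Pic_2group|split; [apply pic_incl_ssmf|]].
    intros G HG F HF. exists (Pic_lift HG F HF). split.
    + split; [apply Pic_lift_ssmf|apply Pic_lift_incl].
    + intros F' [_ <-]. apply Pic_lift_unique.
  - intros M. split; [apply P_axioms|split; [apply P_pure|split; [apply pi_functor_ssmf|]]].
    intros N HN F HF. exists (P_lift F HF HN). split.
    + split; [apply P_lift_ssmf|apply P_lift_pi].
    + intros F' [HF' <-]. apply P_lift_unique; assumption.
Qed.
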